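(* Let $\mathbf{v}_1,\mathbf{r}_u,\mathbf{r}_v\in\mathbb{R}^3$ with $\mathbf{r}_u,\mathbf{r}_v$ linearly independent, and let $\mathbf{r}_q(u,v)=\mathbf{r}_u u+\mathbf{r}_v v+\mathbf{v}_1$. For integers $n\ge 0$, $|m|\le n$, $b\ge 0$, $c\ge 0$ define $$Q_{n,b}^{m,c}(u,v)=R_n^m(\mathbf{r}_q(u,v))\,u^b v^c,\qquad \psi_{n,b}^{m,c}=\int_0^1\!\!\int_0^{1-u}Q_{n,b}^{m,c}(u,v)\,dv\,du,\qquad j_{n,b}^{m,c}=\int_0^1 Q_{n,b}^{m,c}(u,1-u)\,du,$$ with the convention that $Q_{n,b}^{m,c}$, $\psi_{n,b}^{m,c}$, $j_{n,b}^{m,c}$ are zero whenever $n<0$ or $|m|>n$. Write $\mathbf{v}_1=(v_{1,x},v_{1,y},v_{1,z})^T$ and set $\xi_0=(v_{1,x}+i v_{1,y})/2$, $\eta_0=(v_{1,x}-i v_{1,y})/2$, $z_0=v_{1,z}$. Then for all integers $n\ge 0$, $|m|\le n$, $b\ge0$, $c\ge 0$, $$\psi_{n,b}^{m,c}=\frac{i\,\xi_0\,\psi_{n-1,b}^{m-1,c}+i\,\eta_0\,\psi_{n-1,b}^{m+1,c}-z_0\,\psi_{n-1,b}^{m,c}+j_{n,b}^{m,c}}{n+b+c+2}.$$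
   Context: The regular solid harmonics are defined for $n=0,1,2,\dots$, $m=-n,\dots,n$ by $$R_n^m(\mathbf{r})=\frac{(-1)^n i^{|m|}}{(n+|m|)!}\,r^n P_n^{|m|}(\cos\theta)\,e^{im\varphi},$$ where $(r,\theta,\varphi)$ are the spherical coordinates of $\mathbf{r}=(x,y,z)^T=r(\sin\theta\cos\varphi,\sin\theta\sin\varphi,\cos\theta)^T$, and for $m\ge 0$, $P_n^m(\mu)=\frac{(-1)^m(1-\mu^2)^{m/2}}{2^n n!}\frac{d^{m+n}}{d\mu^{m+n}}(\mu^2-1)^n$ are the associated Legendre functions. $R_n^m$ is taken to be $0$ when $|m|>n$ or $n<0$. *)

From Stdlib Require Import Reals ZArith.
From Coquelicot Require Import Coquelicot.
Open Scope R_scope.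

Definition vec3 := (R * R * R)%type.
Definition vx (p : vec3) : R := fst (fst p).
Definition vy (p : vec3) : R := snd (fst p).
Definition vz (p : vec3) : R := snd p.
Definition vadd (p q : vec3) : vec3 := (vx p + vx q, vy p + vy q, vz p + vz q).
Definition vscal (a : R) (p : vec3) : vec3 := (a * vx p, a * vy p, a * vz p).

Definition assoc_legendre (n m : nat) (mu : R) : R :=
  (-1) ^ m * (sqrt (1 - mu ^ 2)) ^ m / (2 ^ n * INR (fact n))
  * Derive_n (fun t => (t ^ 2 - 1) ^ n) (m + n) mu.

Definition sph_r (p : vec3) : R := sqrt (vx p ^ 2 + vy p ^ 2 + vz p ^ 2).
(* cos theta, with theta in [0, pi]; conventionally theta = 0 at the origin *)
Definition sph_cos_theta (p : vec3) : R :=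
  if Req_EM_T (sph_r p) 0 then 1 else vz p / sph_r p.
(* e^{i phi} = cos phi + i sin phi; conventionally phi = 0 on the z-axis *)
Definition sph_eiphi (p : vec3) : C :=
  let rho := sqrt (vx p ^ 2 + vy p ^ 2) in
  if Req_EM_T rho 0 then RtoC 1 else (vx p / rho, vy p / rho).

Definition Cpowz (w : C) (m : Z) : C :=
  if (0 <=? m)%Z then Cpow w (Z.to_nat m) else Cpow (Cinv w) (Z.to_nat (- m)).

Definition solid_R (n m : Z) (p : vec3) : C :=
  if ((n <? 0)%Z || (n <? Z.abs m)%Z)%bool then RtoC 0 else
  let nn := Z.to_nat n in
  let am := Z.to_nat (Z.abs m) in
  Cmult
    (Cdiv (Cmult (RtoC ((-1) ^ nn)) (Cpow Ci am)) (RtoC (INR (fact (nn + am)))))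
    (Cmult (RtoC (sph_r p ^ nn * assoc_legendre nn am (sph_cos_theta p)))
           (Cpowz (sph_eiphi p) m)).

Definition r_q (v1 ru rv : vec3) (u v : R) : vec3 :=
  vadd (vadd (vscal u ru) (vscal v rv)) v1.

Definition Q_fun (v1 ru rv : vec3) (n m : Z) (b c : nat) (u v : R) : C :=
  Cmult (solid_R n m (r_q v1 ru rv u v)) (RtoC (u ^ b * v ^ c)).

Definition psi (v1 ru rv : vec3) (n m : Z) (b c : nat) : C :=
  RInt (V := C_R_CompleteNormedModule)
    (fun u => RInt (V := C_R_CompleteNormedModule)
                (fun v => Q_fun v1 ru rv n m b c u v) 0 (1 - u)) 0 1.

Definition jfun (v1 ru rv : vec3) (n m : Z) (b c : nat) : C :=
  RInt (V := C_R_CompleteNormedModule)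
    (fun u => Q_fun v1 ru rv n m b c u (1 - u)) 0 1.

Definition lin_indep2 (ru rv : vec3) : Prop :=
  forall a b : R, vadd (vscal a ru) (vscal b rv) = (0, 0, 0) -> a = 0 /\ b = 0.

(* Write xi = (x + i y)/2 and eta = (x - i y)/2. Expanding the derivative of (mu^2 - 1)^n in the
   associated Legendre function shows that R_n^m is the polynomial
     sum_q i^(2q+m) (-1)^s xi^(q+m)/(q+m)! eta^q/q! z^s/s!,   s = n - 2q - m,
   terms with a negative exponent being omitted. Two facts follow termwise: the derivative of
   R_n^m in a direction a is i xi_a R_(n-1)^(m-1) + i eta_a R_(n-1)^(m+1) - z_a R_(n-1)^m, and,
   by homogeneity, this expression with a = r itself equals n R_n^m.
   On the triangle 0 <= v <= 1 - u, the divergence theorem for the field (u, v) f gives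
     int_T (u f_u + v f_v + 2 f) = int_0^1 f(u, 1 - u) du.
   For f = Q_(n,b)^(m,c), since r_q = u r_u + v r_v + v_1, homogeneity turns u f_u + v f_v into
   (n + b + c) f minus the directional derivative along v_1, which is the recurrence. *)

From Stdlib Require Import Reals ZArith Lia Lra.
From Coquelicot Require Import Coquelicot.
Open Scope R_scope.

Notation is_derive_C := (@is_derive R_AbsRing C_R_NormedModule).
Notation ex_RInt_C := (@ex_RInt C_R_NormedModule).
Notation RInt_C := (@RInt C_R_CompleteNormedModule).

Ltac Csimpl := unfold Cmult, Cplus, Cminus, Copp, RtoC, Ci; simpl.
Ltac Cring := apply injective_projections; Csimpl; ring.
Ltac eq_at T := match goal with |- ?a = ?b => change (@eq T a b) end.

Lemma is_derive_C_fst (f : R -> C) x (l : C) :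
  is_derive_C f x l -> is_derive (fun t => fst (f t)) x (fst l).
Proof.
  intros H. eapply filterdiff_ext_lin.
  - apply (filterdiff_comp' (U := R_NormedModule) (V := C_R_NormedModule)
             (W := R_NormedModule) f fst x _ fst H).
    apply filterdiff_linear, (is_linear_fst (U := R_NormedModule) (V := R_NormedModule)).
  - reflexivity.
Qed.

Lemma is_derive_C_snd (f : R -> C) x (l : C) :
  is_derive_C f x l -> is_derive (fun t => snd (f t)) x (snd l).
Proof.
  intros H. eapply filterdiff_ext_lin.
  - apply (filterdiff_comp' (U := R_NormedModule) (V := C_R_NormedModule)
             (W := R_NormedModule) f snd x _ snd H).
    apply filterdiff_linear, (is_linear_snd (U := R_NormedModule) (V := R_NormedModule)).
  - reflexivity.
Qed.

Lemma is_derive_C_pair (f : R -> C) x (l : C) :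
  is_derive (fun t => fst (f t)) x (fst l) -> is_derive (fun t => snd (f t)) x (snd l) ->
  is_derive_C f x l.
Proof.
  intros H1 H2. eapply filterdiff_ext_lin.
  - eapply filterdiff_ext.
    2: apply (filterdiff_comp'_2 (K := R_AbsRing) (T := R_NormedModule) (U := R_NormedModule)
                (V := R_NormedModule) (W := C_R_NormedModule) _ _ pair x _ _ pair H1 H2).
    + intros y; simpl; destruct (f y); reflexivity.
    + eapply filterdiff_ext_lin; [eapply filterdiff_ext; [|apply filterdiff_id]|];
        intros [a b]; reflexivity.
  - intros y; destruct l; reflexivity.
Qed.

Lemma is_derive_C_unique (f : R -> C) x l1 l2 :
  is_derive_C f x l1 -> is_derive_C f x l2 -> l1 = l2.
Proof.
  intros H1 H2. apply injective_projections.
  - apply is_derive_C_fst, is_derive_unique in H1, H2. congruence.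
  - apply is_derive_C_snd, is_derive_unique in H1, H2. congruence.
Qed.

Lemma is_derive_C_ext (f g : R -> C) x l :
  (forall t, f t = g t) -> is_derive_C f x l -> is_derive_C g x l.
Proof. apply (is_derive_ext (K := R_AbsRing)). Qed.

Lemma is_derive_C_const (c : C) x : is_derive_C (fun _ => c) x (RtoC 0).
Proof. apply (is_derive_const (K := R_AbsRing) (V := C_R_NormedModule)). Qed.

Lemma is_derive_C_plus (f g : R -> C) x (df dg : C) :
  is_derive_C f x df -> is_derive_C g x dg ->
  is_derive_C (fun t => f t + g t)%C x (df + dg)%C.
Proof. apply (is_derive_plus (K := R_AbsRing) (V := C_R_NormedModule)). Qed.

Lemma is_derive_C_mult (f g : R -> C) x (df dg : C) :
  is_derive_C f x df -> is_derive_C g x dg ->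
  is_derive_C (fun t => f t * g t)%C x (df * g x + f x * dg)%C.
Proof.
  intros Hf Hg.
  apply is_derive_C_fst in Hf as Hf1; apply is_derive_C_snd in Hf as Hf2.
  apply is_derive_C_fst in Hg as Hg1; apply is_derive_C_snd in Hg as Hg2.
  apply is_derive_C_pair; simpl.
  - replace (fst df * fst (g x) - snd df * snd (g x) + (fst (f x) * fst dg - snd (f x) * snd dg))
      with ((fst df * fst (g x) + fst (f x) * fst dg) - (snd df * snd (g x) + snd (f x) * snd dg))
      by ring.
    apply (is_derive_minus (K := R_AbsRing) (V := R_NormedModule));
      apply Derive.is_derive_mult; auto.
  - replace (fst df * snd (g x) + snd df * fst (g x) + (fst (f x) * snd dg + snd (f x) * fst dg))
      with ((fst df * snd (g x) + fst (f x) * snd dg) + (snd df * fst (g x) + snd (f x) * fst dg))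
      by ring.
    apply (is_derive_plus (K := R_AbsRing) (V := R_NormedModule));
      apply Derive.is_derive_mult; auto.
Qed.

Lemma is_derive_RtoC (f : R -> R) x l :
  is_derive f x l -> is_derive_C (fun t => RtoC (f t)) x (RtoC l).
Proof.
  intros H. apply is_derive_C_pair; simpl; [exact H|].
  apply (is_derive_const (K := R_AbsRing) (V := R_NormedModule)).
Qed.

Lemma is_derive_C_affine (w c : C) x : is_derive_C (fun t => w + RtoC t * c)%C x c.
Proof.
  pose proof (is_derive_C_plus _ _ x _ _ (is_derive_C_const w x)
    (is_derive_C_mult (fun t => RtoC t) (fun _ => c) x _ _
       (is_derive_RtoC _ x _ (is_derive_id (K := R_AbsRing) x)) (is_derive_C_const c x))) as H.
  cbv beta in H. change (one : R_AbsRing) with 1 in H.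
  replace (RtoC 0 + (RtoC 1 * c + RtoC x * RtoC 0))%C with c in H by ring.
  exact H.
Qed.

Lemma is_derive_C_pow (g : R -> C) x (dg : C) (k : nat) :
  is_derive_C g x dg ->
  is_derive_C (fun t => g t ^ k)%C x (INR k * dg * g x ^ pred k)%C.
Proof.
  intros Hg. induction k as [|k IH].
  - apply (is_derive_C_ext (fun _ => RtoC 1)); [reflexivity|].
    replace (INR 0 * dg * g x ^ pred 0)%C with (RtoC 0) by (cbn [pred INR]; ring).
    apply is_derive_C_const.
  - apply (is_derive_C_ext (fun t => g t * g t ^ k)%C); [reflexivity|].
    replace (INR (S k) * dg * g x ^ pred (S k))%C
      with (dg * g x ^ k + g x * (INR k * dg * g x ^ pred k))%C.
    + apply (is_derive_C_mult g); assumption.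
    + rewrite S_INR, RtoC_plus. destruct k as [|k]; cbn [pred INR]; [ring|].
      rewrite Cpow_S. ring.
Qed.

(** * A divergence identity on the triangle *)

Lemma continuity_2d_pt_slice_r f x y :
  continuity_2d_pt f x y -> continuity_pt (fun t => f x t) y.
Proof.
  intros H. apply continuity_pt_locally. intros eps.
  destruct (H eps) as [d Hd]. exists d. intros u Hu.
  apply Hd; [rewrite Rminus_eq_0, Rabs_R0; apply cond_pos|exact Hu].
Qed.

Lemma continuity_2d_pt_slice_anti f c x :
  continuity_2d_pt f x (c - x) -> continuity_pt (fun t => f t (c - t)) x.
Proof.
  intros H. apply continuity_pt_locally. intros eps.
  destruct (H eps) as [d Hd]. exists d. intros u Hu.
  apply Hd; [exact Hu|].
  replace (c - u - (c - x)) with (- (u - x)) by ring. rewrite Rabs_Ropp. exact Hu.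
Qed.

Lemma RInt_ext_R (f g : R -> R) a b : (forall x, f x = g x) -> RInt f a b = RInt g a b.
Proof. intros H. apply RInt_ext. intros; apply H. Qed.

Lemma ex_RInt_continuity_pt (f : R -> R) a b :
  (forall x, continuity_pt f x) -> ex_RInt f a b.
Proof.
  intros H. apply (ex_RInt_continuous (V := R_CompleteNormedModule)).
  intros x _. apply continuity_pt_filterlim, H.
Qed.

Lemma ex_RInt_slice f x a b :
  (forall y, continuity_2d_pt f x y) -> ex_RInt (fun t => f x t) a b.
Proof. intros H. apply ex_RInt_continuity_pt. intros y. apply continuity_2d_pt_slice_r, H. Qed.

Lemma continuity_pt_is_derive (f : R -> R) x l : is_derive f x l -> continuity_pt f x.
Proof.
  intros H. apply continuity_pt_filterlim.
  apply (ex_derive_continuous (K := R_AbsRing) (V := R_NormedModule)). eexists; exact H.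
Qed.

Lemma is_derive_RInt_triangle_slice (f fu : R -> R -> R) x :
  (forall u v, is_derive (fun t => f t v) u (fu u v)) ->
  (forall u v, continuity_2d_pt f u v) ->
  (forall u v, continuity_2d_pt fu u v) ->
  is_derive (fun x => RInt (fun t => f x t) 0 (1 - x)) x
    (RInt (fun t => fu x t) 0 (1 - x) - f x (1 - x)).
Proof.
  intros Hd Cf Cfu.
  assert (HD : forall u v, Derive (fun z => f z v) u = fu u v)
    by (intros; apply is_derive_unique, Hd).
  assert (CD : forall u v, continuity_2d_pt (fun u v => Derive (fun z => f z v) u) u v).
  { intros u v. eapply continuity_2d_pt_ext; [|apply (Cfu u v)]. intros; rewrite HD; reflexivity. }
  assert (All : forall (P : R -> R -> Prop) y, (forall u v, P u v) -> locally_2d P x y)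
    by (intros P y HP; exists (mkposreal 1 Rlt_0_1); intros; apply HP).
  replace (RInt (fun t => fu x t) 0 (1 - x) - f x (1 - x)) with
    (RInt (fun t => Derive (fun u => f u t) x) 0 (1 - x) + - f x 0 * 0 + f x (1 - x) * (-1)).
  2: { rewrite (RInt_ext_R _ (fun t => fu x t)) by apply HD. ring. }
  apply (is_derive_RInt_param_bound_comp f (fun _ => 0) (fun x => 1 - x) x 0 (-1)).
  - apply filter_forall. intros; apply ex_RInt_slice; auto.
  - exists (mkposreal 1 Rlt_0_1). apply filter_forall. intros; apply ex_RInt_slice; auto.
  - exists (mkposreal 1 Rlt_0_1). apply filter_forall. intros; apply ex_RInt_slice; auto.
  - apply (is_derive_const (K := R_AbsRing) (V := R_NormedModule)).
  - replace (-1) with (0 - 1) by ring.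
    apply (is_derive_minus (K := R_AbsRing) (V := R_NormedModule)).
    + apply (is_derive_const (K := R_AbsRing) (V := R_NormedModule)).
    + apply (is_derive_id (K := R_AbsRing)).
  - exists (mkposreal 1 Rlt_0_1). apply filter_forall. intros; eexists; apply Hd.
  - intros; apply CD.
  - apply All; intros; apply CD.
  - apply All; intros; apply CD.
  - apply continuity_2d_pt_slice_r; auto.
  - apply continuity_2d_pt_slice_r; auto.
Qed.

Section TriangleDivergence.

Variables g gu gv guu : R -> R -> R.
Hypothesis Dgu : forall x y, is_derive (fun t => g t y) x (gu x y).
Hypothesis Dgv : forall x y, is_derive (fun t => g x t) y (gv x y).
Hypothesis Dguu : forall x y, is_derive (fun t => gu t y) x (guu x y).
Hypothesis Cg : forall x y, continuity_2d_pt g x y.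
Hypothesis Cgu : forall x y, continuity_2d_pt gu x y.
Hypothesis Cgv : forall x y, continuity_2d_pt gv x y.
Hypothesis Cguu : forall x y, continuity_2d_pt guu x y.

Let slice_int (f : R -> R -> R) (x : R) : R := RInt (f x) 0 (1 - x).

Let Cslice (F : R -> R -> R) x :
  (forall x y, continuity_2d_pt F x y) -> forall v, continuity_pt (fun v => F x v) v.
Proof. intros HF v. apply continuity_2d_pt_slice_r, HF. Qed.

Lemma is_derive_slice_int x : is_derive (slice_int g) x (slice_int gu x - g x (1 - x)).
Proof. apply is_derive_RInt_triangle_slice; auto. Qed.

Lemma RInt_slice_v_euler x :
  RInt (fun v => v * gv x v + g x v) 0 (1 - x) = (1 - x) * g x (1 - x).
Proof.
  replace ((1 - x) * g x (1 - x)) with ((1 - x) * g x (1 - x) - 0 * g x 0) by ring.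
  apply is_RInt_unique, (is_RInt_derive (V := R_CompleteNormedModule) (fun v => v * g x v)).
  - intros t _.
    pose proof (Derive.is_derive_mult (fun v => v) (g x) t _ _
                  (is_derive_id (K := R_AbsRing) t) (Dgv x t)) as H.
    cbv beta in H; change one with 1 in H.
    replace (1 * g x t + t * gv x t) with (t * gv x t + g x t) in H by ring.
    exact H.
  - intros t _. apply continuity_pt_filterlim, continuity_pt_plus; [|apply Cslice, Cg].
    apply continuity_pt_mult; [apply derivable_continuous_pt, derivable_pt_id|apply Cslice, Cgv].
Qed.

Lemma slice_int_euler x :
  slice_int (fun x v => x * gu x v + v * gv x v + 2 * g x v) x =
  slice_int g x + x * (slice_int gu x - g x (1 - x)) + g x (1 - x).
Proof.
  unfold slice_int.
  rewrite (RInt_ext_R _ (fun v => x * gu x v + (v * gv x v + g x v) + g x v)) by (intros; ring).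
  assert (Eu : ex_RInt (fun v => gu x v) 0 (1 - x)) by (apply ex_RInt_slice; auto).
  assert (Eg : ex_RInt (fun v => g x v) 0 (1 - x)) by (apply ex_RInt_slice; auto).
  assert (Ev : ex_RInt (fun v => v * gv x v + g x v) 0 (1 - x)).
  { apply ex_RInt_continuity_pt. intros. apply continuity_pt_plus; [|apply Cslice, Cg].
    apply continuity_pt_mult; [apply derivable_continuous_pt, derivable_pt_id|apply Cslice, Cgv]. }
  rewrite (RInt_plus (V := R_CompleteNormedModule) (fun v => x * gu x v + _)).
  2: { apply (ex_RInt_plus (V := R_NormedModule)); auto.
       apply (ex_RInt_scal (V := R_NormedModule)); auto. }
  2: exact Eg.
  rewrite (RInt_plus (V := R_CompleteNormedModule) (fun v => x * gu x v)); auto.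
  2: apply (ex_RInt_scal (V := R_NormedModule)); auto.
  rewrite (RInt_scal (V := R_CompleteNormedModule)) by auto.
  rewrite RInt_slice_v_euler.
  change scal with Rmult. change plus with Rplus. ring.
Qed.

Lemma triangle_divergence_R :
  RInt (fun x => RInt (fun v => x * gu x v + v * gv x v + 2 * g x v) 0 (1 - x)) 0 1 =
  RInt (fun x => g x (1 - x)) 0 1.
Proof.
  set (h := slice_int g).
  set (h' := fun x => slice_int gu x - g x (1 - x)).
  assert (Ch : forall x, continuity_pt h x)
    by (intros; eapply continuity_pt_is_derive, is_derive_slice_int).
  assert (Ch' : forall x, continuity_pt h' x).
  { intros x. apply continuity_pt_minus; [|apply continuity_2d_pt_slice_anti, Cg].
    eapply continuity_pt_is_derive, is_derive_RInt_triangle_slice; auto. }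
  assert (Cgd : forall x, continuity_pt (fun x => g x (1 - x)) x)
    by (intros; apply continuity_2d_pt_slice_anti, Cg).
  assert (Cxh : forall x, continuity_pt (fun x => h x + x * h' x) x).
  { intros. apply continuity_pt_plus; [auto|].
    apply continuity_pt_mult; [apply derivable_continuous_pt, derivable_pt_id|auto]. }
  rewrite (RInt_ext_R _ (fun x => (h x + x * h' x) + g x (1 - x))) by apply slice_int_euler.
  rewrite (RInt_plus (V := R_CompleteNormedModule)) by (apply ex_RInt_continuity_pt; auto).
  replace (RInt (fun x => h x + x * h' x) 0 1) with (1 * h 1 - 0 * h 0).
  2: { symmetry. apply is_RInt_unique, (is_RInt_derive (V := R_CompleteNormedModule) (fun x => x * h x)).
       - intros t _.
         pose proof (Derive.is_derive_mult (fun x => x) h t _ _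
                       (is_derive_id (K := R_AbsRing) t) (is_derive_slice_int t)) as H.
         cbv beta in H; change one with 1 in H.
         replace (1 * h t + t * (slice_int gu t - g t (1 - t))) with (h t + t * h' t) in H by (unfold h'; ring).
         exact H.
       - intros t _. apply continuity_pt_filterlim, Cxh. }
  unfold h, slice_int. rewrite Rminus_eq_0, (RInt_point (V := R_CompleteNormedModule)).
  change plus with Rplus. change zero with 0.
  rewrite Rmult_0_r, Rmult_0_l, Rminus_0_r, Rplus_0_l. reflexivity.
Qed.

End TriangleDivergence.

(** * Polynomial functions of two real variables *)

Inductive poly2 : (R -> R -> C) -> Prop :=
| poly2_const c : poly2 (fun _ _ => c)
| poly2_u : poly2 (fun u _ => RtoC u)
| poly2_v : poly2 (fun _ v => RtoC v)
| poly2_plus f g : poly2 f -> poly2 g -> poly2 (fun u v => f u v + g u v)%C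
| poly2_mult f g : poly2 f -> poly2 g -> poly2 (fun u v => f u v * g u v)%C
| poly2_ext f g : poly2 f -> (forall u v, f u v = g u v) -> poly2 g.

Lemma poly2_derive_u f : poly2 f ->
  exists fu, poly2 fu /\ forall x y, is_derive_C (fun t => f t y) x (fu x y).
Proof.
  induction 1 as [c| | |f g _ [fu [Pfu Dfu]] _ [gu [Pgu Dgu]]
                 |f g Pf [fu [Pfu Dfu]] Pg [gu [Pgu Dgu]]|f g _ [fu [Pfu Dfu]] E].
  - exists (fun _ _ => RtoC 0). split; [constructor|intros; apply is_derive_C_const].
  - exists (fun _ _ => RtoC 1). split; [constructor|].
    intros; apply is_derive_RtoC, (is_derive_id (K := R_AbsRing)).
  - exists (fun _ _ => RtoC 0). split; [constructor|intros; apply is_derive_C_const].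
  - exists (fun u v => fu u v + gu u v)%C. split; [constructor; auto|].
    intros; apply (is_derive_C_plus (fun t => f t y) (fun t => g t y)); auto.
  - exists (fun u v => fu u v * g u v + f u v * gu u v)%C.
    split; [repeat constructor; auto|].
    intros; apply (is_derive_C_mult (fun t => f t y) (fun t => g t y)); auto.
  - exists fu. split; [auto|]. intros. eapply is_derive_C_ext; [intros; apply E|apply Dfu].
Qed.

Lemma poly2_derive_v f : poly2 f ->
  exists fv, poly2 fv /\ forall x y, is_derive_C (fun t => f x t) y (fv x y).
Proof.
  induction 1 as [c| | |f g _ [fv [Pfv Dfv]] _ [gv [Pgv Dgv]]
                 |f g Pf [fv [Pfv Dfv]] Pg [gv [Pgv Dgv]]|f g _ [fv [Pfv Dfv]] E].
  - exists (fun _ _ => RtoC 0). split; [constructor|intros; apply is_derive_C_const].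
  - exists (fun _ _ => RtoC 0). split; [constructor|intros; apply is_derive_C_const].
  - exists (fun _ _ => RtoC 1). split; [constructor|].
    intros; apply is_derive_RtoC, (is_derive_id (K := R_AbsRing)).
  - exists (fun u v => fv u v + gv u v)%C. split; [constructor; auto|].
    intros; apply (is_derive_C_plus (fun t => f x t) (fun t => g x t)); auto.
  - exists (fun u v => fv u v * g u v + f u v * gv u v)%C.
    split; [repeat constructor; auto|].
    intros; apply (is_derive_C_mult (fun t => f x t) (fun t => g x t)); auto.
  - exists fv. split; [auto|]. intros. eapply is_derive_C_ext; [intros; apply E|apply Dfv].
Qed.

Lemma poly2_continuous f : poly2 f -> forall x y,
  continuity_2d_pt (fun u v => fst (f u v)) x y /\
  continuity_2d_pt (fun u v => snd (f u v)) x y.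
Proof.
  induction 1 as [c| | |f g _ IHf _ IHg|f g _ IHf _ IHg|f g _ IHf E]; intros x y.
  - split; apply continuity_2d_pt_const.
  - split; simpl; [apply continuity_2d_pt_id1|apply continuity_2d_pt_const].
  - split; simpl; [apply continuity_2d_pt_id2|apply continuity_2d_pt_const].
  - destruct (IHf x y), (IHg x y). split; apply continuity_2d_pt_plus; auto.
  - destruct (IHf x y), (IHg x y). split; simpl.
    + apply continuity_2d_pt_minus; apply continuity_2d_pt_mult; auto.
    + apply continuity_2d_pt_plus; apply continuity_2d_pt_mult; auto.
  - destruct (IHf x y) as [A B].
    split; [eapply continuity_2d_pt_ext; [|exact A]|eapply continuity_2d_pt_ext; [|exact B]];
      intros; cbv beta; rewrite E; reflexivity.
Qed.

Lemma poly2_scal c f : poly2 f -> poly2 (fun u v => c * f u v)%C.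
Proof. intros; apply poly2_mult; [apply poly2_const|auto]. Qed.

Lemma poly2_pow f k : poly2 f -> poly2 (fun u v => f u v ^ k)%C.
Proof.
  intros Pf. induction k as [|k IH].
  - apply (poly2_ext (fun _ _ => RtoC 1)); [constructor|reflexivity].
  - apply (poly2_ext (fun u v => f u v * f u v ^ k)%C); [constructor; auto|reflexivity].
Qed.

Lemma poly2_sum (F : nat -> R -> R -> C) K :
  (forall k, poly2 (F k)) -> poly2 (fun u v => sum_n (fun k => F k u v) K).
Proof.
  intros PF. induction K as [|K IH].
  - apply (poly2_ext (F O)); [auto|intros; rewrite sum_O; reflexivity].
  - apply (poly2_ext (fun u v => sum_n (fun k => F k u v) K + F (S K) u v)%C).
    + constructor; auto.
    + intros; rewrite sum_Sn; reflexivity.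
Qed.

Lemma poly2_affine (a b c : C) : poly2 (fun u v => RtoC u * a + RtoC v * b + c)%C.
Proof.
  repeat apply poly2_plus; try apply poly2_const;
    apply poly2_mult; constructor.
Qed.

Lemma RInt_C_pair (f : R -> C) a b :
  ex_RInt (fun t => fst (f t)) a b -> ex_RInt (fun t => snd (f t)) a b ->
  is_RInt (V := C_R_NormedModule) f a b
    (RInt (fun t => fst (f t)) a b, RInt (fun t => snd (f t)) a b).
Proof.
  intros H1 H2.
  apply (is_RInt_fct_extend_pair (U := R_NormedModule) (V := R_NormedModule));
    apply (RInt_correct (V := R_CompleteNormedModule)); auto.
Qed.

Lemma RInt_C_scal_l (c : C) (f : R -> C) a b :
  ex_RInt_C f a b -> RInt_C (fun t => c * f t)%C a b = (c * RInt_C f a b)%C.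
Proof.
  intros [l H]. rewrite (is_RInt_unique (V := C_R_CompleteNormedModule) _ _ _ _ H).
  apply (is_RInt_unique (V := C_R_CompleteNormedModule)).
  destruct c as [c1 c2].
  apply (is_RInt_fct_extend_fst (U := R_NormedModule) (V := R_NormedModule)) in H as H1.
  apply (is_RInt_fct_extend_snd (U := R_NormedModule) (V := R_NormedModule)) in H as H2.
  apply (is_RInt_fct_extend_pair (U := R_NormedModule) (V := R_NormedModule)); simpl.
  - apply (is_RInt_minus (V := R_NormedModule)); apply (is_RInt_scal (V := R_NormedModule)); auto.
  - apply (is_RInt_plus (V := R_NormedModule)); apply (is_RInt_scal (V := R_NormedModule)); auto.
Qed.

Definition tri_int (f : R -> R -> C) : C :=
  RInt_C (fun u => RInt_C (fun v => f u v) 0 (1 - u)) 0 1.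
Definition hyp_int (f : R -> R -> C) : C := RInt_C (fun u => f u (1 - u)) 0 1.
Definition tri_int_R (g : R -> R -> R) : R := RInt (fun u => RInt (fun v => g u v) 0 (1 - u)) 0 1.

Lemma tri_int_ext f g : (forall u v, f u v = g u v) -> tri_int f = tri_int g.
Proof.
  intros H. unfold tri_int.
  apply (RInt_ext (V := C_R_CompleteNormedModule)); intros.
  apply (RInt_ext (V := C_R_CompleteNormedModule)); intros. apply H.
Qed.

Section Poly2Integrals.

Variable f : R -> R -> C.
Hypothesis Pf : poly2 f.

Let f1 u v := fst (f u v).
Let f2 u v := snd (f u v).

Lemma poly2_slice_RInt u :
  RInt_C (fun v => f u v) 0 (1 - u) = (RInt (f1 u) 0 (1 - u), RInt (f2 u) 0 (1 - u)).
Proof.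
  apply (is_RInt_unique (V := C_R_CompleteNormedModule)), RInt_C_pair;
    apply (ex_RInt_slice (fun u v => _ (f u v))); intros; apply (poly2_continuous f Pf).
Qed.

Lemma ex_RInt_poly2_slice u : ex_RInt_C (fun v => f u v) 0 (1 - u).
Proof.
  eexists. apply RInt_C_pair; apply (ex_RInt_slice (fun u v => _ (f u v))); intros; apply (poly2_continuous f Pf).
Qed.

Lemma poly2_slice_int_continuous x :
  continuity_pt (fun x => RInt (f1 x) 0 (1 - x)) x /\
  continuity_pt (fun x => RInt (f2 x) 0 (1 - x)) x.
Proof.
  destruct (poly2_derive_u f Pf) as [fu [Pfu Dfu]].
  split; eapply continuity_pt_is_derive.
  - apply (is_derive_RInt_triangle_slice f1 (fun u v => fst (fu u v))).
    + intros; apply is_derive_C_fst, Dfu.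
    + intros; apply (poly2_continuous f Pf).
    + intros; apply (poly2_continuous fu Pfu).
  - apply (is_derive_RInt_triangle_slice f2 (fun u v => snd (fu u v))).
    + intros; apply is_derive_C_snd, Dfu.
    + intros; apply (poly2_continuous f Pf).
    + intros; apply (poly2_continuous fu Pfu).
Qed.

Lemma tri_int_pair : tri_int f = (tri_int_R f1, tri_int_R f2).
Proof.
  unfold tri_int. rewrite (RInt_ext (V := C_R_CompleteNormedModule) _ _ _ _ (fun u _ => poly2_slice_RInt u)).
  apply (is_RInt_unique (V := C_R_CompleteNormedModule)), RInt_C_pair;
    apply ex_RInt_continuity_pt; intros; apply poly2_slice_int_continuous.
Qed.

Lemma ex_RInt_tri_int : ex_RInt_C (fun u => RInt_C (fun v => f u v) 0 (1 - u)) 0 1.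
Proof.
  eapply ex_RInt_ext; [intros x _; symmetry; apply poly2_slice_RInt|].
  eexists. apply RInt_C_pair;
    apply ex_RInt_continuity_pt; intros; apply poly2_slice_int_continuous.
Qed.

Lemma hyp_int_pair :
  hyp_int f = (RInt (fun u => f1 u (1 - u)) 0 1, RInt (fun u => f2 u (1 - u)) 0 1).
Proof.
  apply (is_RInt_unique (V := C_R_CompleteNormedModule)), RInt_C_pair;
    apply ex_RInt_continuity_pt; intros;
    apply (continuity_2d_pt_slice_anti (fun u v => _ (f u v))), (poly2_continuous f Pf).
Qed.

Lemma tri_int_scal c : tri_int (fun u v => c * f u v)%C = (c * tri_int f)%C.
Proof.
  unfold tri_int.
  rewrite (RInt_ext (V := C_R_CompleteNormedModule) _ (fun u => c * RInt_C (fun v => f u v) 0 (1 - u))%C).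
  - apply RInt_C_scal_l, ex_RInt_tri_int.
  - intros; apply RInt_C_scal_l, ex_RInt_poly2_slice.
Qed.

End Poly2Integrals.

Lemma tri_int_plus f g : poly2 f -> poly2 g ->
  tri_int (fun u v => f u v + g u v)%C = (tri_int f + tri_int g)%C.
Proof.
  intros Pf Pg. unfold tri_int.
  rewrite (RInt_ext (V := C_R_CompleteNormedModule) _ (fun u => RInt_C (fun v => f u v) 0 (1 - u)
                                + RInt_C (fun v => g u v) 0 (1 - u))%C).
  - apply (RInt_plus (V := C_R_CompleteNormedModule)); apply ex_RInt_tri_int; auto.
  - intros; apply (RInt_plus (V := C_R_CompleteNormedModule)); apply ex_RInt_poly2_slice; auto.
Qed.

Lemma triangle_divergence f fu fv : poly2 f ->
  (forall x y, is_derive_C (fun t => f t y) x (fu x y)) ->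
  (forall x y, is_derive_C (fun t => f x t) y (fv x y)) ->
  tri_int (fun u v => RtoC u * fu u v + RtoC v * fv u v + RtoC 2 * f u v)%C = hyp_int f.
Proof.
  intros Pf Du Dv.
  destruct (poly2_derive_u f Pf) as [fu' [Pfu' Du']].
  destruct (poly2_derive_v f Pf) as [fv' [Pfv' Dv']].
  destruct (poly2_derive_u fu' Pfu') as [fuu [Pfuu Duu]].
  rewrite (tri_int_ext _ (fun u v => RtoC u * fu' u v + RtoC v * fv' u v + RtoC 2 * f u v)%C).
  2: { intros u v. now rewrite (is_derive_C_unique _ _ _ _ (Du u v) (Du' u v)),
                               (is_derive_C_unique _ _ _ _ (Dv u v) (Dv' u v)). }
  rewrite tri_int_pair, hyp_int_pair by (repeat constructor; auto).
  unfold tri_int_R. apply injective_projections; simpl.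
  - rewrite <- (triangle_divergence_R (fun u v => fst (f u v)) (fun u v => fst (fu' u v))
                 (fun u v => fst (fv' u v)) (fun u v => fst (fuu u v))).
    + apply RInt_ext; intros; apply RInt_ext; intros; simpl; ring.
    + intros; apply is_derive_C_fst, Du'.
    + intros; apply is_derive_C_fst, Dv'.
    + intros; apply is_derive_C_fst, Duu.
    + intros; apply (poly2_continuous f Pf).
    + intros; apply (poly2_continuous fu' Pfu').
    + intros; apply (poly2_continuous fv' Pfv').
    + intros; apply (poly2_continuous fuu Pfuu).
  - rewrite <- (triangle_divergence_R (fun u v => snd (f u v)) (fun u v => snd (fu' u v))
                 (fun u v => snd (fv' u v)) (fun u v => snd (fuu u v))).
    + apply RInt_ext; intros; apply RInt_ext; intros; simpl; ring.
    + intros; apply is_derive_C_snd, Du'.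
    + intros; apply is_derive_C_snd, Dv'.
    + intros; apply is_derive_C_snd, Duu.
    + intros; apply (poly2_continuous f Pf).
    + intros; apply (poly2_continuous fu' Pfu').
    + intros; apply (poly2_continuous fv' Pfv').
    + intros; apply (poly2_continuous fuu Pfuu).
Qed.

Lemma sum_n_Sl {G : AbelianMonoid} (f : nat -> G) K :
  sum_n f (S K) = plus (f O) (sum_n (fun j => f (S j)) K).
Proof. unfold sum_n. rewrite sum_Sn_m, sum_n_m_S by lia. reflexivity. Qed.

Lemma sum_n_zero {G : AbelianMonoid} (f : nat -> G) K :
  (forall k, (k <= K)%nat -> f k = zero) -> sum_n f K = zero.
Proof.
  intros H. induction K as [|K IH].
  - rewrite sum_O. apply H; lia.
  - rewrite sum_Sn, IH by (intros; apply H; lia). rewrite H by lia. apply plus_zero_l.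
Qed.

Lemma sum_n_single {G : AbelianMonoid} (f : nat -> G) K k0 : (k0 <= K)%nat ->
  (forall k, (k <= K)%nat -> k <> k0 -> f k = zero) -> sum_n f K = f k0.
Proof.
  intros Hk H. induction K as [|K IH].
  - replace k0 with O by lia. apply sum_O.
  - rewrite sum_Sn. destruct (Nat.eq_dec k0 (S K)) as [->|Hne].
    + rewrite sum_n_zero; [apply plus_zero_l|intros; apply H; lia].
    + rewrite IH by (lia || intros; apply H; lia). rewrite (H (S K)) by lia. apply plus_zero_r.
Qed.

Lemma sum_n_vanishing_tail {G : AbelianMonoid} (f : nat -> G) K K' :
  (K <= K')%nat -> (forall j, (K < j)%nat -> f j = zero) -> sum_n f K' = sum_n f K.
Proof.
  intros HK Hz. induction K' as [|K' IH].
  - replace K with O by lia. reflexivity.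
  - destruct (Nat.eq_dec K (S K')) as [->|Hne]; [reflexivity|].
    rewrite sum_Sn, IH, Hz by lia. apply plus_zero_r.
Qed.

Lemma sum_n_vanishing_head {G : AbelianMonoid} (f : nat -> G) K M :
  (forall q, (q < M)%nat -> f q = zero) -> sum_n f (K + M) = sum_n (fun j => f (j + M)%nat) K.
Proof.
  revert f. induction M as [|M IH]; intros f H.
  - rewrite Nat.add_0_r. apply sum_n_ext. intros; rewrite Nat.add_0_r; reflexivity.
  - replace (K + S M)%nat with (S (K + M)) by lia.
    rewrite sum_n_Sl, H, plus_zero_l by lia.
    rewrite (IH (fun j => f (S j))) by (intros; apply H; lia).
    apply sum_n_ext. intros; f_equal; lia.
Qed.

Lemma sum_n_shift {G : AbelianMonoid} (A A' : nat -> G) K :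
  A O = zero -> A' K = zero -> (forall j, A (S j) = A' j) -> sum_n A K = sum_n A' K.
Proof.
  intros H0 HK HS. destruct K as [|K].
  - rewrite !sum_O. congruence.
  - rewrite sum_n_Sl, sum_Sn, HK, H0, plus_zero_l, plus_zero_r. apply sum_n_ext, HS.
Qed.

(** * Solid harmonics as polynomials in xi, eta, z *)

Definition xi (p : vec3) : C := (vx p / 2, vy p / 2).
Definition eta (p : vec3) : C := (vx p / 2, - (vy p / 2)).
Definition zc (p : vec3) : C := RtoC (vz p).

Lemma xi_vadd p q : xi (vadd p q) = (xi p + xi q)%C.
Proof. unfold xi, eta, zc, vadd, vscal, vx, vy, vz; apply injective_projections; Csimpl; field. Qed.
Lemma eta_vadd p q : eta (vadd p q) = (eta p + eta q)%C.
Proof. unfold xi, eta, zc, vadd, vscal, vx, vy, vz; apply injective_projections; Csimpl; field. Qed.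
Lemma zc_vadd p q : zc (vadd p q) = (zc p + zc q)%C.
Proof. unfold xi, eta, zc, vadd, vscal, vx, vy, vz; apply injective_projections; Csimpl; ring. Qed.
Lemma xi_vscal t p : xi (vscal t p) = (RtoC t * xi p)%C.
Proof. unfold xi, eta, zc, vadd, vscal, vx, vy, vz; apply injective_projections; Csimpl; field. Qed.
Lemma eta_vscal t p : eta (vscal t p) = (RtoC t * eta p)%C.
Proof. unfold xi, eta, zc, vadd, vscal, vx, vy, vz; apply injective_projections; Csimpl; field. Qed.
Lemma zc_vscal t p : zc (vscal t p) = (RtoC t * zc p)%C.
Proof. unfold xi, eta, zc, vadd, vscal, vx, vy, vz; apply injective_projections; Csimpl; ring. Qed.

(* [w^k / k!], extended by [0] to negative [k] so that out-of-range terms vanish. *)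
Definition divpow (w : C) (k : Z) : C :=
  if (k <? 0)%Z then RtoC 0 else (w ^ Z.to_nat k * RtoC (/ INR (fact (Z.to_nat k))))%C.

Lemma divpow_neg w k : (k < 0)%Z -> divpow w k = RtoC 0.
Proof. intros H. unfold divpow. destruct (Z.ltb_spec k 0); [reflexivity|lia]. Qed.

Lemma divpow_nonneg w k : (0 <= k)%Z ->
  divpow w k = (w ^ Z.to_nat k * RtoC (/ INR (fact (Z.to_nat k))))%C.
Proof. intros H. unfold divpow. destruct (Z.ltb_spec k 0); [lia|reflexivity]. Qed.

Lemma divpow_0 w : divpow w 0 = RtoC 1.
Proof. unfold divpow. simpl. rewrite Rinv_1. ring. Qed.

Lemma divpow_succ w k : (0 <= k)%Z ->
  divpow w (k + 1) = (w * divpow w k * RtoC (/ IZR (k + 1)))%C.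
Proof.
  intros Hk. rewrite !divpow_nonneg by lia.
  replace (Z.to_nat (k + 1)) with (S (Z.to_nat k)) by lia.
  replace (IZR (k + 1)) with (INR (S (Z.to_nat k))) by (rewrite INR_IZR_INZ; f_equal; lia).
  rewrite fact_simpl, mult_INR, Rinv_mult, RtoC_mult, Cpow_S. ring.
Qed.

Lemma divpow_mul w k : (w * divpow w (k - 1))%C = (RtoC (IZR k) * divpow w k)%C.
Proof.
  destruct (Z_lt_le_dec k 1) as [Hk|Hk].
  - rewrite (divpow_neg w (k - 1)) by lia.
    destruct (Z_lt_le_dec k 0); [rewrite divpow_neg by lia; ring|].
    replace k with 0%Z by lia. simpl. ring.
  - replace k with (k - 1 + 1)%Z at 2 3 by lia. rewrite divpow_succ by lia.
    assert (Hk0 : IZR (k - 1 + 1) <> 0) by (apply not_0_IZR; lia).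
    transitivity (RtoC (IZR (k - 1 + 1) * / IZR (k - 1 + 1)) * (w * divpow w (k - 1)))%C.
    + rewrite Rinv_r by exact Hk0. ring.
    + rewrite RtoC_mult. ring.
Qed.

Lemma is_derive_divpow (w c : C) (k : Z) x :
  is_derive_C (fun t => divpow (w + RtoC t * c)%C k) x (c * divpow (w + RtoC x * c)%C (k - 1))%C.
Proof.
  destruct (Z_lt_le_dec k 1) as [Hk|Hk].
  - rewrite divpow_neg by lia. rewrite Cmult_0_r.
    destruct (Z_lt_le_dec k 0).
    + apply (is_derive_C_ext (fun _ => RtoC 0)); [intros; rewrite divpow_neg by lia; reflexivity|].
      apply is_derive_C_const.
    + apply (is_derive_C_ext (fun _ => RtoC 1)); [intros; replace k with 0%Z by lia; now rewrite divpow_0|].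
      apply is_derive_C_const.
  - rewrite divpow_nonneg by lia.
    destruct (Z.to_nat k) as [|K] eqn:EK; [lia|].
    replace (Z.to_nat (k - 1)) with K by lia.
    apply (is_derive_C_ext (fun t => (w + RtoC t * c) ^ S K * RtoC (/ INR (fact (S K))))%C).
    { intros t. rewrite divpow_nonneg, EK by lia. reflexivity. }
    replace (c * ((w + RtoC x * c) ^ K * RtoC (/ INR (fact K))))%C
      with (INR (S K) * c * (w + RtoC x * c) ^ pred (S K) * RtoC (/ INR (fact (S K)))
            + (w + RtoC x * c) ^ S K * RtoC 0)%C.
    + apply (is_derive_C_mult (fun t => (w + RtoC t * c) ^ S K)%C (fun _ => RtoC (/ INR (fact (S K)))));
        [|apply is_derive_C_const].
      apply is_derive_C_pow, is_derive_C_affine.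
    + rewrite fact_simpl, mult_INR, Rinv_mult, RtoC_mult.
      assert (HK : INR (S K) <> 0) by (apply not_0_INR; lia).
      transitivity (RtoC (INR (S K) * / INR (S K)) * c * (w + RtoC x * c) ^ K
                    * RtoC (/ INR (fact K)))%C.
      * rewrite RtoC_mult. simpl pred. ring.
      * rewrite Rinv_r by exact HK. ring.
Qed.

Definition harm_monomial (p q s : Z) (P : vec3) : C :=
  (divpow (xi P) p * divpow (eta P) q * divpow (zc P) s)%C.

Definition harm_coef (p q s : Z) : C := (Ci ^ (Z.to_nat p + Z.to_nat q) * RtoC ((-1) ^ Z.to_nat s))%C.

Definition harm_term (n m : Z) (q : nat) (P : vec3) : C :=
  (harm_coef (Z.of_nat q + m) (Z.of_nat q) (n - 2 * Z.of_nat q - m) *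
   harm_monomial (Z.of_nat q + m) (Z.of_nat q) (n - 2 * Z.of_nat q - m) P)%C.

Definition harm_poly (n m : Z) (P : vec3) : C := sum_n (fun q => harm_term n m q P) (Z.to_nat n).

Definition ladder (n m : Z) (a P : vec3) : C :=
  (Ci * xi a * harm_poly (n - 1) (m - 1) P + Ci * eta a * harm_poly (n - 1) (m + 1) P
   - zc a * harm_poly (n - 1) m P)%C.

Lemma harm_monomial_neg p q s P : (p < 0 \/ q < 0 \/ s < 0)%Z -> harm_monomial p q s P = RtoC 0.
Proof.
  intros [H|[H|H]]; unfold harm_monomial;
    rewrite (divpow_neg _ _ H); ring.
Qed.

Lemma is_derive_harm_monomial p q s P a x :
  is_derive_C (fun t => harm_monomial p q s (vadd P (vscal t a))) x
    (xi a * harm_monomial (p - 1) q s (vadd P (vscal x a))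
     + eta a * harm_monomial p (q - 1) s (vadd P (vscal x a))
     + zc a * harm_monomial p q (s - 1) (vadd P (vscal x a)))%C.
Proof.
  set (X t := (xi P + RtoC t * xi a)%C). set (E t := (eta P + RtoC t * eta a)%C).
  set (Z t := (zc P + RtoC t * zc a)%C).
  assert (HM : forall p q s t,
    harm_monomial p q s (vadd P (vscal t a)) = (divpow (X t) p * divpow (E t) q * divpow (Z t) s)%C).
  { intros. unfold harm_monomial, X, E, Z.
    now rewrite xi_vadd, eta_vadd, zc_vadd, xi_vscal, eta_vscal, zc_vscal. }
  rewrite !HM.
  apply (is_derive_C_ext (fun t => divpow (X t) p * divpow (E t) q * divpow (Z t) s)%C);
    [intros; symmetry; apply HM|].
  replace (xi a * (divpow (X x) (p - 1) * divpow (E x) q * divpow (Z x) s) +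
           eta a * (divpow (X x) p * divpow (E x) (q - 1) * divpow (Z x) s) +
           zc a * (divpow (X x) p * divpow (E x) q * divpow (Z x) (s - 1)))%C
    with ((xi a * divpow (X x) (p - 1) * divpow (E x) q +
           divpow (X x) p * (eta a * divpow (E x) (q - 1))) * divpow (Z x) s +
          divpow (X x) p * divpow (E x) q * (zc a * divpow (Z x) (s - 1)))%C by ring.
  apply (is_derive_C_mult (fun t => divpow (X t) p * divpow (E t) q)%C (fun t => divpow (Z t) s)).
  - apply (is_derive_C_mult (fun t => divpow (X t) p) (fun t => divpow (E t) q));
      apply is_derive_divpow.
  - apply is_derive_divpow.
Qed.

Lemma harm_coef_succ_p p q s : (0 <= p)%Z -> harm_coef (p + 1) q s = (Ci * harm_coef p q s)%C.
Proof.
  intros H. unfold harm_coef. replace (Z.to_nat (p + 1) + Z.to_nat q)%nat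
    with (S (Z.to_nat p + Z.to_nat q)) by lia.
  rewrite Cpow_S. ring.
Qed.

Lemma harm_coef_succ_q p q s : (0 <= q)%Z -> harm_coef p (q + 1) s = (Ci * harm_coef p q s)%C.
Proof.
  intros H. unfold harm_coef. replace (Z.to_nat p + Z.to_nat (q + 1))%nat
    with (S (Z.to_nat p + Z.to_nat q)) by lia.
  rewrite Cpow_S. ring.
Qed.

Lemma harm_coef_succ_s p q s : (0 <= s)%Z -> harm_coef p q (s + 1) = (- harm_coef p q s)%C.
Proof.
  intros H. unfold harm_coef. replace (Z.to_nat (s + 1)) with (S (Z.to_nat s)) by lia.
  simpl pow. generalize (Ci ^ (Z.to_nat p + Z.to_nat q))%C. intros w. Cring.
Qed.

Lemma harm_term_vanish n m q P : (n < Z.of_nat q)%Z -> harm_term n m q P = RtoC 0.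
Proof. intros H. unfold harm_term. rewrite harm_monomial_neg by lia. ring. Qed.

Lemma harm_poly_sum n m P K :
  (Z.to_nat n <= K)%nat -> harm_poly n m P = sum_n (fun q => harm_term n m q P) K.
Proof.
  intros HK. symmetry. apply sum_n_vanishing_tail; [exact HK|].
  intros j Hj. apply harm_term_vanish. lia.
Qed.

Lemma harm_lower_xi n m q P :
  (harm_coef (Z.of_nat q + m) (Z.of_nat q) (n - 2 * Z.of_nat q - m) *
   harm_monomial (Z.of_nat q + m - 1) (Z.of_nat q) (n - 2 * Z.of_nat q - m) P)%C =
  (Ci * harm_term (n - 1) (m - 1) q P)%C.
Proof.
  unfold harm_term.
  replace (n - 1 - 2 * Z.of_nat q - (m - 1))%Z with (n - 2 * Z.of_nat q - m)%Z by lia.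
  replace (Z.of_nat q + (m - 1))%Z with (Z.of_nat q + m - 1)%Z by lia.
  destruct (Z_lt_le_dec (Z.of_nat q + m - 1) 0).
  - rewrite harm_monomial_neg by lia. ring.
  - replace (Z.of_nat q + m)%Z with (Z.of_nat q + m - 1 + 1)%Z at 1 by lia.
    rewrite harm_coef_succ_p by lia. ring.
Qed.

Lemma harm_lower_eta n m q P :
  (harm_coef (Z.of_nat (S q) + m) (Z.of_nat (S q)) (n - 2 * Z.of_nat (S q) - m) *
   harm_monomial (Z.of_nat (S q) + m) (Z.of_nat (S q) - 1) (n - 2 * Z.of_nat (S q) - m) P)%C =
  (Ci * harm_term (n - 1) (m + 1) q P)%C.
Proof.
  unfold harm_term. rewrite Nat2Z.inj_succ. unfold Z.succ.
  replace (Z.of_nat q + 1 + m)%Z with (Z.of_nat q + (m + 1))%Z by lia.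
  replace (Z.of_nat q + 1 - 1)%Z with (Z.of_nat q) by lia.
  replace (n - 2 * (Z.of_nat q + 1) - m)%Z with (n - 1 - 2 * Z.of_nat q - (m + 1))%Z by lia.
  rewrite harm_coef_succ_q by lia. ring.
Qed.

Lemma harm_lower_z n m q P :
  (harm_coef (Z.of_nat q + m) (Z.of_nat q) (n - 2 * Z.of_nat q - m) *
   harm_monomial (Z.of_nat q + m) (Z.of_nat q) (n - 2 * Z.of_nat q - m - 1) P)%C =
  (- harm_term (n - 1) m q P)%C.
Proof.
  unfold harm_term.
  replace (n - 1 - 2 * Z.of_nat q - m)%Z with (n - 2 * Z.of_nat q - m - 1)%Z by lia.
  destruct (Z_lt_le_dec (n - 2 * Z.of_nat q - m - 1) 0).
  - rewrite harm_monomial_neg by lia. ring.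
  - replace (n - 2 * Z.of_nat q - m)%Z with (n - 2 * Z.of_nat q - m - 1 + 1)%Z at 1 by lia.
    rewrite harm_coef_succ_s by lia. ring.
Qed.

Lemma sum_n_Cplus (u v : nat -> C) K :
  sum_n (fun k => u k + v k)%C K = (sum_n u K + sum_n v K)%C.
Proof. apply (sum_n_plus (G := C_AbelianMonoid)). Qed.

Lemma sum_n_Cmult_l (a : C) (u : nat -> C) K :
  sum_n (fun k => a * u k)%C K = (a * sum_n u K)%C.
Proof. apply (sum_n_mult_l (K := C_Ring)). Qed.

Lemma sum_n_Copp (u : nat -> C) K : sum_n (fun k => - u k)%C K = (- sum_n u K)%C.
Proof.
  induction K as [|K IH]; [now rewrite !sum_O|].
  rewrite !sum_Sn, IH. change plus with Cplus. eq_at C; ring.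
Qed.

Definition ladder_term (n m : Z) (a P : vec3) (q : nat) : C :=
  let c := harm_coef (Z.of_nat q + m) (Z.of_nat q) (n - 2 * Z.of_nat q - m) in
  (xi a * (c * harm_monomial (Z.of_nat q + m - 1) (Z.of_nat q) (n - 2 * Z.of_nat q - m) P)
   + eta a * (c * harm_monomial (Z.of_nat q + m) (Z.of_nat q - 1) (n - 2 * Z.of_nat q - m) P)
   + zc a * (c * harm_monomial (Z.of_nat q + m) (Z.of_nat q) (n - 2 * Z.of_nat q - m - 1) P))%C.

Lemma ladder_term_vanish n m a P q : (n < Z.of_nat q)%Z -> ladder_term n m a P q = RtoC 0.
Proof. intros H. unfold ladder_term. rewrite !harm_monomial_neg by lia. ring. Qed.

Lemma sum_ladder_term n m a P : (0 <= n)%Z ->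
  sum_n (ladder_term n m a P) (Z.to_nat n) = ladder n m a P.
Proof.
  intros Hn. set (K := Z.to_nat n).
  rewrite <- (sum_n_vanishing_tail _ K (S K)) by
    (lia || intros; apply ladder_term_vanish; lia).
  unfold ladder_term. rewrite !sum_n_Cplus, !sum_n_Cmult_l.
  rewrite (sum_n_ext _ _ _ (fun q => harm_lower_xi n m q P)), sum_n_Cmult_l, <- harm_poly_sum by lia.
  rewrite (sum_n_ext _ _ _ (fun q => harm_lower_z n m q P)).
  rewrite sum_n_Copp, <- harm_poly_sum by lia.
  rewrite sum_n_Sl, (sum_n_ext _ _ _ (fun q => harm_lower_eta n m q P)), sum_n_Cmult_l,
    <- harm_poly_sum by lia.
  rewrite harm_monomial_neg by (simpl; lia).
  unfold ladder. change plus with Cplus. eq_at C; ring.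
Qed.

Lemma is_derive_harm_poly n m P a x : (0 <= n)%Z ->
  is_derive_C (fun t => harm_poly n m (vadd P (vscal t a))) x (ladder n m a (vadd P (vscal x a))).
Proof.
  intros Hn. rewrite <- sum_ladder_term by exact Hn.
  apply (is_derive_sum_n (K := R_AbsRing) (V := C_R_NormedModule)
           (fun q t => harm_term n m q (vadd P (vscal t a)))).
  intros q _. unfold harm_term, ladder_term.
  set (c := harm_coef (Z.of_nat q + m) (Z.of_nat q) (n - 2 * Z.of_nat q - m)).
  set (y := vadd P (vscal x a)).
  eapply is_derive_C_ext; [intros; reflexivity|].
  replace (xi a * (c * harm_monomial (Z.of_nat q + m - 1) (Z.of_nat q) (n - 2 * Z.of_nat q - m) y)
     + eta a * (c * harm_monomial (Z.of_nat q + m) (Z.of_nat q - 1) (n - 2 * Z.of_nat q - m) y)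
     + zc a * (c * harm_monomial (Z.of_nat q + m) (Z.of_nat q) (n - 2 * Z.of_nat q - m - 1) y))%C
    with (RtoC 0 * harm_monomial (Z.of_nat q + m) (Z.of_nat q) (n - 2 * Z.of_nat q - m) y
     + c * (xi a * harm_monomial (Z.of_nat q + m - 1) (Z.of_nat q) (n - 2 * Z.of_nat q - m) y
            + eta a * harm_monomial (Z.of_nat q + m) (Z.of_nat q - 1) (n - 2 * Z.of_nat q - m) y
            + zc a * harm_monomial (Z.of_nat q + m) (Z.of_nat q) (n - 2 * Z.of_nat q - m - 1) y))%C
    by ring.
  apply (is_derive_C_mult (fun _ => c)); [apply is_derive_C_const|apply is_derive_harm_monomial].
Qed.

Lemma ladder_term_self n m P q : ladder_term n m P P q = (RtoC (IZR n) * harm_term n m q P)%C.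
Proof.
  unfold ladder_term, harm_term, harm_monomial.
  set (p := (Z.of_nat q + m)%Z). set (k := Z.of_nat q). set (s := (n - 2 * k - m)%Z).
  set (c := harm_coef p k s).
  transitivity (c * ((xi P * divpow (xi P) (p - 1)) * divpow (eta P) k * divpow (zc P) s
                     + divpow (xi P) p * (eta P * divpow (eta P) (k - 1)) * divpow (zc P) s
                     + divpow (xi P) p * divpow (eta P) k * (zc P * divpow (zc P) (s - 1))))%C.
  { ring. }
  rewrite !divpow_mul.
  replace (IZR n) with (IZR p + IZR k + IZR s) by (rewrite <- !plus_IZR; f_equal; lia).
  rewrite !RtoC_plus. ring.
Qed.

Lemma harm_poly_euler n m P : (0 <= n)%Z -> ladder n m P P = (RtoC (IZR n) * harm_poly n m P)%C.
Proof.
  intros Hn. rewrite <- sum_ladder_term by exact Hn. unfold harm_poly.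
  rewrite <- sum_n_Cmult_l. apply sum_n_ext. intros. apply ladder_term_self.
Qed.

(** * Derivatives of (t^2 - 1)^n *)

Definition rdivpow (a : Z) (mu : R) : R :=
  if (a <? 0)%Z then 0 else mu ^ Z.to_nat a / INR (fact (Z.to_nat a)).

Lemma rdivpow_neg a mu : (a < 0)%Z -> rdivpow a mu = 0.
Proof. intros H. unfold rdivpow. destruct (Z.ltb_spec a 0); [reflexivity|lia]. Qed.

Lemma rdivpow_nonneg a mu : (0 <= a)%Z -> rdivpow a mu = mu ^ Z.to_nat a / INR (fact (Z.to_nat a)).
Proof. intros H. unfold rdivpow. destruct (Z.ltb_spec a 0); [lia|reflexivity]. Qed.

Lemma rdivpow_succ a mu : (0 <= a)%Z -> IZR (a + 1) * rdivpow (a + 1) mu = mu * rdivpow a mu.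
Proof.
  intros Ha. rewrite !rdivpow_nonneg by lia.
  replace (Z.to_nat (a + 1)) with (S (Z.to_nat a)) by lia.
  replace (IZR (a + 1)) with (INR (S (Z.to_nat a))) by (rewrite INR_IZR_INZ; f_equal; lia).
  rewrite fact_simpl, mult_INR. simpl pow.
  assert (INR (S (Z.to_nat a)) <> 0) by (apply not_0_INR; lia).
  assert (INR (fact (Z.to_nat a)) <> 0) by apply INR_fact_neq_0.
  field; auto.
Qed.

Lemma rdivpow_mul a mu : mu * rdivpow a mu = IZR (a + 1) * rdivpow (a + 1) mu.
Proof.
  destruct (Z_lt_le_dec a 0); [|symmetry; apply rdivpow_succ; lia].
  rewrite rdivpow_neg by lia. destruct (Z_lt_le_dec (a + 1) 0).
  - rewrite rdivpow_neg by lia. ring.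
  - replace (a + 1)%Z with 0%Z by lia. ring.
Qed.

Lemma rdivpow_0 mu : rdivpow 0 mu = 1.
Proof. rewrite rdivpow_nonneg by lia. simpl. field. Qed.

Lemma rdivpow_at_0 a : a <> 0%Z -> rdivpow a 0 = 0.
Proof.
  intros Ha. destruct (Z_lt_le_dec a 0); [now apply rdivpow_neg|].
  rewrite rdivpow_nonneg, pow_i by lia. unfold Rdiv. ring.
Qed.

Lemma is_derive_rdivpow a mu : is_derive (rdivpow a) mu (rdivpow (a - 1) mu).
Proof.
  destruct (Z_lt_le_dec a 1) as [Ha|Ha].
  - rewrite rdivpow_neg by lia.
    apply (is_derive_ext (fun _ => if (a =? 0)%Z then 1 else 0)).
    + intros t. destruct (Z.eqb_spec a 0) as [->|]; [now rewrite rdivpow_0|].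
      now rewrite rdivpow_neg by lia.
    + apply (is_derive_const (K := R_AbsRing) (V := R_NormedModule)).
  - rewrite rdivpow_nonneg by lia.
    destruct (Z.to_nat a) as [|K] eqn:EK; [lia|].
    replace (Z.to_nat (a - 1)) with K by lia.
    apply (is_derive_ext (fun t => / INR (fact (S K)) * t ^ S K)).
    { intros t. rewrite (rdivpow_nonneg a t), EK by lia. apply Rmult_comm. }
    replace (mu ^ K / INR (fact K)) with (/ INR (fact (S K)) * (INR (S K) * 1 * mu ^ pred (S K))).
    + apply (is_derive_scal (fun t => t ^ S K)), is_derive_pow, (is_derive_id (K := R_AbsRing)).
    + rewrite fact_simpl, mult_INR. simpl pred.
      assert (INR (S K) <> 0) by (apply not_0_INR; lia).
      assert (INR (fact K) <> 0) by apply INR_fact_neq_0.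
      field; auto.
Qed.

Definition binom_deriv (n N : nat) (mu : R) : R :=
  sum_n (fun k => Binomial.C n k * (-1) ^ (n - k) * INR (fact (2 * k))
                  * rdivpow (Z.of_nat (2 * k) - Z.of_nat N) mu) n.

Lemma is_derive_binom_deriv n N mu : is_derive (binom_deriv n N) mu (binom_deriv n (S N) mu).
Proof.
  apply (is_derive_sum_n (K := R_AbsRing) (V := R_NormedModule)).
  intros k _. apply is_derive_scal.
  replace (Z.of_nat (2 * k) - Z.of_nat (S N))%Z with (Z.of_nat (2 * k) - Z.of_nat N - 1)%Z by lia.
  apply is_derive_rdivpow.
Qed.

Lemma binom_deriv_0 n mu : binom_deriv n 0 mu = (mu ^ 2 - 1) ^ n.
Proof.
  unfold Rminus. rewrite binomial, <- sum_n_Reals. apply sum_n_ext. intros k.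
  rewrite rdivpow_nonneg by lia. replace (Z.to_nat (Z.of_nat (2 * k) - Z.of_nat 0)) with (2 * k)%nat by lia.
  rewrite <- pow_mult. replace (- (1)) with (-1) by ring.
  assert (INR (fact (2 * k)) <> 0) by apply INR_fact_neq_0.
  eq_at R; field; auto.
Qed.

Lemma Derive_n_binom_deriv n N mu : Derive_n (fun t => (t ^ 2 - 1) ^ n) N mu = binom_deriv n N mu.
Proof.
  revert mu. induction N as [|N IH]; intros mu.
  - symmetry. apply binom_deriv_0.
  - simpl. rewrite (Derive_ext _ (binom_deriv n N)) by apply IH.
    apply is_derive_unique, is_derive_binom_deriv.
Qed.

(* The (n + M)-th derivative of (mu^2 - 1)^n, written as a polynomial in mu^2 - 1 and mu: in this
   form the factor (1 - mu^2)^(M/2) of the associated Legendre function combines with it into a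
   polynomial in the Cartesian coordinates. *)
Definition legendre_coef (n M j : nat) : R :=
  2 ^ n * INR (fact n) * INR (fact (n + M)) /
  (2 ^ M * 4 ^ j * INR (fact (M + j)) * INR (fact j)).

Definition legendre_sum (n M : nat) (mu : R) : R :=
  sum_n (fun j => legendre_coef n M j * (mu ^ 2 - 1) ^ j
                  * rdivpow (Z.of_nat n - Z.of_nat M - 2 * Z.of_nat j) mu) n.

Lemma legendre_coef_rec n M j :
  legendre_coef n M j + legendre_coef n M (S j) * INR (S j) * 2 * (INR n - INR M - 2 * INR j - 1)
  = legendre_coef n (S M) j.
Proof.
  unfold legendre_coef.
  replace (M + S j)%nat with (S (M + j)) by lia.
  replace (S M + j)%nat with (S (M + j)) by lia.
  replace (n + S M)%nat with (S (n + M)) by lia.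
  rewrite !fact_simpl, !mult_INR. simpl pow. rewrite !S_INR, !plus_INR.
  assert (INR (fact (M + j)) <> 0) by apply INR_fact_neq_0.
  assert (INR (fact j) <> 0) by apply INR_fact_neq_0.
  assert (0 < 2 ^ M) by (apply pow_lt; lra).
  assert (0 < 4 ^ j) by (apply pow_lt; lra).
  assert (0 <= INR M) by apply pos_INR.
  assert (0 <= INR j) by apply pos_INR.
  field. repeat split; lra.
Qed.

Lemma is_derive_legendre_term (c : R) (j : nat) (s : Z) mu :
  is_derive (fun y => c * (y ^ 2 - 1) ^ j * rdivpow s y) mu
    (c * (INR j * (2 * mu) * (mu ^ 2 - 1) ^ pred j) * rdivpow s mu
     + c * (mu ^ 2 - 1) ^ j * rdivpow (s - 1) mu).
Proof.
  apply (is_derive_ext (fun y => c * ((y ^ 2 - 1) ^ j * rdivpow s y))); [intros; eq_at R; ring|].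
  replace (c * (INR j * (2 * mu) * (mu ^ 2 - 1) ^ pred j) * rdivpow s mu
           + c * (mu ^ 2 - 1) ^ j * rdivpow (s - 1) mu)
    with (c * (INR j * (2 * mu) * (mu ^ 2 - 1) ^ pred j * rdivpow s mu
               + (mu ^ 2 - 1) ^ j * rdivpow (s - 1) mu)) by ring.
  apply is_derive_scal, Derive.is_derive_mult; [|apply is_derive_rdivpow].
  apply (is_derive_pow (fun y => y ^ 2 - 1)). auto_derive; [exact I|ring].
Qed.

Lemma is_derive_legendre_sum n M mu : is_derive (legendre_sum n M) mu (legendre_sum n (S M) mu).
Proof.
  set (s j := (Z.of_nat n - Z.of_nat M - 2 * Z.of_nat j)%Z).
  set (c := legendre_coef n M).
  set (A j := c j * (INR j * (2 * mu) * (mu ^ 2 - 1) ^ pred j) * rdivpow (s j) mu).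
  set (B j := c j * (mu ^ 2 - 1) ^ j * rdivpow (s j - 1) mu).
  set (A' j := c (S j) * INR (S j) * 2 * IZR (s j - 1) * ((mu ^ 2 - 1) ^ j * rdivpow (s j - 1) mu)).
  replace (legendre_sum n (S M) mu) with (sum_n (fun j => A j + B j) n).
  { apply (is_derive_sum_n (K := R_AbsRing) (V := R_NormedModule)
             (fun j y => c j * (y ^ 2 - 1) ^ j * rdivpow (s j) y)).
    intros j _. apply is_derive_legendre_term. }
  rewrite (sum_n_plus (G := R_AbelianMonoid)), (sum_n_shift A A').
  - rewrite <- (sum_n_plus (G := R_AbelianMonoid)). apply sum_n_ext. intros j.
    replace (Z.of_nat n - Z.of_nat (S M) - 2 * Z.of_nat j)%Z with (s j - 1)%Z by (unfold s; lia).
    rewrite <- legendre_coef_rec. unfold A', B, c.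
    replace (IZR (s j - 1)) with (INR n - INR M - 2 * INR j - 1).
    + change plus with Rplus. eq_at R; ring.
    + unfold s. rewrite !minus_IZR, mult_IZR, <- !INR_IZR_INZ. reflexivity.
  - unfold A. change zero with 0. simpl. ring.
  - unfold A'. change zero with 0. rewrite rdivpow_neg by (unfold s; lia). eq_at R; ring.
  - intros j. unfold A, A'. simpl pred.
    replace (s j - 1)%Z with (s (S j) + 1)%Z by (unfold s; lia).
    transitivity (c (S j) * INR (S j) * 2 * (mu ^ 2 - 1) ^ j * (mu * rdivpow (s (S j)) mu)).
    + eq_at R; ring.
    + rewrite rdivpow_mul. eq_at R; ring.
Qed.

Lemma binom_deriv_legendre_sum_at_0 n M : (M <= n)%nat ->
  binom_deriv n (n + M) 0 = legendre_sum n M 0.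
Proof.
  intros HM. unfold binom_deriv, legendre_sum.
  destruct (Nat.Even_or_Odd (n + M)) as [[k0 Hk]|[k0 Hk]].
  - set (j0 := (n - k0)%nat).
    rewrite (sum_n_single _ n k0), (sum_n_single _ n j0) by
      (lia || intros k _ Hne; rewrite rdivpow_at_0 by lia; change zero with 0; eq_at R; ring).
    replace (Z.of_nat (2 * k0) - Z.of_nat (n + M))%Z with 0%Z by lia.
    replace (Z.of_nat n - Z.of_nat M - 2 * Z.of_nat j0)%Z with 0%Z by lia.
    rewrite !rdivpow_0. unfold legendre_coef, Binomial.C.
    replace (M + j0)%nat with k0 by lia. replace (n - k0)%nat with j0 by lia.
    replace (2 * k0)%nat with (n + M)%nat by lia.
    replace (0 ^ 2 - 1) with (-1) by ring.
    replace (2 ^ M * 4 ^ j0) with (2 ^ n).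
    2: { replace 4 with (2 ^ 2) by ring. rewrite <- pow_mult, <- pow_add. f_equal. lia. }
    assert (INR (fact k0) <> 0) by apply INR_fact_neq_0.
    assert (INR (fact j0) <> 0) by apply INR_fact_neq_0.
    assert (0 < 2 ^ n) by (apply pow_lt; lra).
    eq_at R; field. repeat split; lra.
  - rewrite !sum_n_zero; [reflexivity|..]; intros k _;
      rewrite rdivpow_at_0 by lia; change zero with 0; eq_at R; ring.
Qed.

Lemma is_derive_0_const (f : R -> R) : (forall t, is_derive f t 0) -> forall x y, f x = f y.
Proof.
  intros Hf x y. destruct (Rtotal_order x y) as [H|[->|H]]; [|reflexivity|symmetry];
    apply (eq_is_derive (V := R_NormedModule)); auto.
Qed.

Lemma binom_deriv_legendre_sum n M mu : (M <= n + 1)%nat ->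
  binom_deriv n (n + M) mu = legendre_sum n M mu.
Proof.
  remember (n + 1 - M)%nat as d eqn:Hd. revert M Hd mu.
  induction d as [|d IH]; intros M Hd mu HM.
  - unfold binom_deriv, legendre_sum.
    rewrite !sum_n_zero; [reflexivity|..]; intros k Hk;
      rewrite rdivpow_neg by lia; change zero with 0; eq_at R; ring.
  - assert (D : forall t, is_derive (fun x => binom_deriv n (n + M) x - legendre_sum n M x) t 0).
    { intros t. replace 0 with (binom_deriv n (S (n + M)) t - legendre_sum n (S M) t).
      - apply (is_derive_minus (K := R_AbsRing) (V := R_NormedModule));
          [apply is_derive_binom_deriv|apply is_derive_legendre_sum].
      - replace (S (n + M)) with (n + S M)%nat by lia. rewrite (IH (S M)) by lia. ring. }
    pose proof (is_derive_0_const _ D mu 0) as E; cbv beta in E.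
    rewrite binom_deriv_legendre_sum_at_0 in E by lia. lra.
Qed.

Lemma Derive_n_legendre n M mu : (M <= n)%nat ->
  Derive_n (fun t => (t ^ 2 - 1) ^ n) (M + n) mu = legendre_sum n M mu.
Proof.
  intros HM. rewrite Derive_n_binom_deriv, Nat.add_comm.
  apply binom_deriv_legendre_sum. lia.
Qed.

(** * The solid harmonics are the polynomials [harm_poly] *)

Lemma pow_m1_cases k : (-1) ^ k = 1 \/ (-1) ^ k = -1.
Proof.
  induction k as [|k [IH|IH]]; [left|right|left]; simpl; try rewrite IH; ring.
Qed.

Lemma legendre_term_real (n M j s : nat) (rho r z : R) :
  r <> 0 -> rho ^ 2 + z ^ 2 = r ^ 2 -> n = (M + 2 * j + s)%nat ->
  (-1) ^ n * / INR (fact (n + M)) *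
    (r ^ n * ((-1) ^ M * (/ r) ^ M / (2 ^ n * INR (fact n)) *
      (legendre_coef n M j * ((z / r) ^ 2 - 1) ^ j * ((z / r) ^ s / INR (fact s))))) * 2 ^ M
  = (-1) ^ j * (-1) ^ s * (rho ^ 2 / 4) ^ j * / INR (fact (j + M)) * / INR (fact j)
    * (z ^ s * / INR (fact s)).
Proof.
  intros Hr Hrz Hn.
  assert (Hz : (z / r) ^ 2 - 1 = (-1) * (rho ^ 2 / r ^ 2)) by (field_simplify_eq; auto; lra).
  assert (Hdiv : forall x y k, y <> 0 -> (x / y) ^ k = x ^ k / y ^ k)
    by (intros; unfold Rdiv; rewrite Rpow_mult_distr, pow_inv; auto).
  rewrite Hz, Rpow_mult_distr, !Hdiv, pow_inv by (try apply pow_nonzero; auto).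
  assert (E1 : (-1) ^ n = (-1) ^ M * (-1) ^ s) by (rewrite Hn, !pow_add, pow_1_even; ring).
  assert (E2 : r ^ n = r ^ M * (r ^ 2) ^ j * r ^ s) by (rewrite Hn, !pow_add, pow_mult; ring).
  assert (E3 : 2 ^ n = 2 ^ M * 4 ^ j * 2 ^ s).
  { rewrite Hn, !pow_add, pow_mult. replace (2 ^ 2) with 4 by ring. ring. }
  unfold legendre_coef. rewrite E1, E2, E3.
  replace (M + j)%nat with (j + M)%nat by lia.
  assert (HrM : r ^ M <> 0) by (apply pow_nonzero; auto).
  assert (Hr2j : (r ^ 2) ^ j <> 0) by (apply pow_nonzero, pow_nonzero; auto).
  assert (Hrs : r ^ s <> 0) by (apply pow_nonzero; auto).
  assert (H2M : 2 ^ M <> 0) by (apply pow_nonzero; lra).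
  assert (H4j : 4 ^ j <> 0) by (apply pow_nonzero; lra).
  assert (H2s : 2 ^ s <> 0) by (apply pow_nonzero; lra).
  pose proof (INR_fact_neq_0 (n + M)). pose proof (INR_fact_neq_0 n).
  pose proof (INR_fact_neq_0 (j + M)). pose proof (INR_fact_neq_0 j).
  pose proof (INR_fact_neq_0 s).
  (* [field] does not know [(-1)^M * (-1)^M = 1]. *)
  destruct (pow_m1_cases M) as [-> | ->]; field; repeat split; auto.
Qed.

Lemma legendre_term (n M j s : nat) (W E : C) (rho r z : R) :
  r <> 0 -> (RtoC rho * E)%C = (RtoC 2 * W)%C -> rho ^ 2 + z ^ 2 = r ^ 2 ->
  n = (M + 2 * j + s)%nat ->
  (RtoC ((-1) ^ n) * Ci ^ M / RtoC (INR (fact (n + M))) *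
   (RtoC (r ^ n * ((-1) ^ M * (rho / r) ^ M / (2 ^ n * INR (fact n)) *
      (legendre_coef n M j * ((z / r) ^ 2 - 1) ^ j * ((z / r) ^ s / INR (fact s))))) * E ^ M))%C
  = (Ci ^ (j + M + j) * RtoC ((-1) ^ s) *
     (W ^ M * RtoC ((rho ^ 2 / 4) ^ j) * RtoC (/ INR (fact (j + M))) * RtoC (/ INR (fact j)) *
      (RtoC z ^ s * RtoC (/ INR (fact s)))))%C.
Proof.
  intros Hr HW Hrz Hn.
  assert (Hci : (Ci ^ (j + M + j) = Ci ^ M * RtoC ((-1) ^ j))%C).
  { replace (j + M + j)%nat with (M + 2 * j)%nat by lia.
    rewrite Cpow_add_r, Cpow_mult_r.
    replace (Ci ^ 2)%C with (RtoC (-1)) by (simpl; Cring).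
    now rewrite RtoC_pow. }
  rewrite Hci. unfold Cdiv. rewrite <- RtoC_inv by apply INR_fact_neq_0.
  set (L := legendre_coef n M j * ((z / r) ^ 2 - 1) ^ j * ((z / r) ^ s / INR (fact s))).
  replace (r ^ n * ((-1) ^ M * (rho / r) ^ M / (2 ^ n * INR (fact n)) * L))
    with (r ^ n * ((-1) ^ M * (/ r) ^ M / (2 ^ n * INR (fact n)) * L) * rho ^ M)
    by (unfold Rdiv; rewrite Rpow_mult_distr; ring).
  set (X := r ^ n * ((-1) ^ M * (/ r) ^ M / (2 ^ n * INR (fact n)) * L)).
  rewrite RtoC_mult, (RtoC_pow rho).
  transitivity (RtoC ((-1) ^ n) * Ci ^ M * RtoC (/ INR (fact (n + M))) * RtoC X
                * (RtoC rho * E) ^ M)%C.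
  { rewrite Cpow_mult_l. ring. }
  rewrite HW, Cpow_mult_l, <- (RtoC_pow 2).
  transitivity (RtoC ((-1) ^ n * / INR (fact (n + M)) * X * 2 ^ M) * (Ci ^ M * W ^ M))%C.
  { rewrite !RtoC_mult. ring. }
  unfold X, L. rewrite (legendre_term_real n M j s rho r z) by assumption.
  rewrite !RtoC_mult, (RtoC_pow z s). ring.
Qed.

Lemma xi_mul_eta p : (xi p * eta p)%C = RtoC ((vx p ^ 2 + vy p ^ 2) / 4).
Proof. unfold xi, eta. apply injective_projections; Csimpl; field. Qed.

Lemma harm_term_xi_form n m j p : (0 <= m)%Z -> (0 <= n - 2 * Z.of_nat j - m)%Z ->
  harm_term n m j p =
    (Ci ^ (j + Z.to_nat m + j) * RtoC ((-1) ^ Z.to_nat (n - 2 * Z.of_nat j - m)) *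
     (xi p ^ Z.to_nat m * RtoC (((vx p ^ 2 + vy p ^ 2) / 4) ^ j) *
      RtoC (/ INR (fact (j + Z.to_nat m))) * RtoC (/ INR (fact j)) *
      (RtoC (vz p) ^ Z.to_nat (n - 2 * Z.of_nat j - m) *
       RtoC (/ INR (fact (Z.to_nat (n - 2 * Z.of_nat j - m)))))))%C.
Proof.
  intros Hm Hs. unfold harm_term, harm_coef, harm_monomial.
  rewrite !divpow_nonneg by lia.
  replace (Z.to_nat (Z.of_nat j + m)) with (j + Z.to_nat m)%nat by lia.
  rewrite !Nat2Z.id, (Cpow_add_r (xi p) j), (RtoC_pow _ j), <- xi_mul_eta, Cpow_mult_l.
  unfold zc. ring.
Qed.

Lemma harm_term_eta_form n m j p : (m < 0)%Z -> (0 <= n - 2 * Z.of_nat j + m)%Z ->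
  harm_term n m (j + Z.to_nat (- m)) p =
    (Ci ^ (j + Z.to_nat (- m) + j) * RtoC ((-1) ^ Z.to_nat (n - 2 * Z.of_nat j + m)) *
     (eta p ^ Z.to_nat (- m) * RtoC (((vx p ^ 2 + vy p ^ 2) / 4) ^ j) *
      RtoC (/ INR (fact (j + Z.to_nat (- m)))) * RtoC (/ INR (fact j)) *
      (RtoC (vz p) ^ Z.to_nat (n - 2 * Z.of_nat j + m) *
       RtoC (/ INR (fact (Z.to_nat (n - 2 * Z.of_nat j + m)))))))%C.
Proof.
  intros Hm Hs. unfold harm_term, harm_coef, harm_monomial.
  rewrite !divpow_nonneg by lia.
  replace (Z.to_nat (Z.of_nat (j + Z.to_nat (- m)) + m)) with j by lia.
  replace (Z.to_nat (Z.of_nat (j + Z.to_nat (- m)))) with (j + Z.to_nat (- m))%nat by lia.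
  replace (n - 2 * Z.of_nat (j + Z.to_nat (- m)) - m)%Z with (n - 2 * Z.of_nat j + m)%Z by lia.
  replace (j + (j + Z.to_nat (- m)))%nat with (j + Z.to_nat (- m) + j)%nat by lia.
  rewrite (Cpow_add_r (eta p)), (RtoC_pow _ j), <- xi_mul_eta, Cpow_mult_l.
  unfold zc. ring.
Qed.

Lemma planar_norm_0 p : sqrt (vx p ^ 2 + vy p ^ 2) = 0 -> vx p = 0 /\ vy p = 0.
Proof. intros H. apply sqrt_eq_0 in H; [split; nra|nra]. Qed.

Lemma sph_eiphi_xi p : (RtoC (sqrt (vx p ^ 2 + vy p ^ 2)) * sph_eiphi p)%C = (RtoC 2 * xi p)%C.
Proof.
  unfold sph_eiphi, xi. destruct (Req_EM_T (sqrt (vx p ^ 2 + vy p ^ 2)) 0) as [H|H].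
  - destruct (planar_norm_0 p H) as [Hx Hy]. rewrite H, Hx, Hy.
    apply injective_projections; Csimpl; field.
  - apply injective_projections; Csimpl; field; auto.
Qed.

Lemma sph_eiphi_inv_eta p :
  (RtoC (sqrt (vx p ^ 2 + vy p ^ 2)) * Cinv (sph_eiphi p))%C = (RtoC 2 * eta p)%C.
Proof.
  unfold sph_eiphi, eta. destruct (Req_EM_T (sqrt (vx p ^ 2 + vy p ^ 2)) 0) as [H|H].
  - destruct (planar_norm_0 p H) as [Hx Hy]. rewrite H, Hx, Hy.
    apply injective_projections; Csimpl; field.
  - set (rho := sqrt (vx p ^ 2 + vy p ^ 2)) in *.
    assert (Hr2 : rho ^ 2 = vx p ^ 2 + vy p ^ 2) by (apply pow2_sqrt; nra).
    assert (H1 : (vx p / rho) ^ 2 + (vy p / rho) ^ 2 = 1) by (field_simplify_eq; auto).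
    unfold Cinv. cbn [fst snd]. rewrite H1.
    apply injective_projections; Csimpl; field; auto.
Qed.

Lemma harm_poly_out_of_range n m p : (n < 0 \/ n < Z.abs m)%Z -> harm_poly n m p = RtoC 0.
Proof.
  intros H. apply (sum_n_zero (G := C_AbelianMonoid)). intros q _.
  unfold harm_term. rewrite harm_monomial_neg by lia. change zero with (RtoC 0); eq_at C; ring.
Qed.

Lemma harm_poly_at_origin n m p : (1 <= n)%Z -> sph_r p = 0 -> harm_poly n m p = RtoC 0.
Proof.
  intros Hn Hr. unfold sph_r in Hr. apply sqrt_eq_0 in Hr; [|nra].
  assert (Hx : vx p = 0) by nra. assert (Hy : vy p = 0) by nra. assert (Hz : vz p = 0) by nra.
  assert (Xi : xi p = RtoC 0) by (unfold xi; rewrite Hx, Hy; apply injective_projections; Csimpl; field).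
  assert (Et : eta p = RtoC 0) by (unfold eta; rewrite Hx, Hy; apply injective_projections; Csimpl; field).
  assert (Zc : zc p = RtoC 0) by (unfold zc; now rewrite Hz).
  assert (D0 : forall k, k <> 0%Z -> divpow (RtoC 0) k = RtoC 0).
  { intros k Hk. destruct (Z_lt_le_dec k 0); [now apply divpow_neg|].
    rewrite divpow_nonneg by lia. destruct (Z.to_nat k) eqn:E; [lia|]. rewrite Cpow_S. ring. }
  apply (sum_n_zero (G := C_AbelianMonoid)). intros q _.
  unfold harm_term, harm_monomial. rewrite Xi, Et, Zc. change zero with (RtoC 0).
  destruct (Z.eq_dec (Z.of_nat q + m) 0); [destruct (Z.eq_dec (Z.of_nat q) 0)|].
  - rewrite (D0 (n - 2 * Z.of_nat q - m)%Z) by lia. eq_at C; ring.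
  - rewrite (D0 (Z.of_nat q)) by lia. eq_at C; ring.
  - rewrite (D0 (Z.of_nat q + m)%Z) by lia. eq_at C; ring.
Qed.

Lemma sum_n_RtoC_scal (c E : C) (B A : R) (g : nat -> R) K :
  (c * (RtoC (B * (A * sum_n g K)) * E))%C = sum_n (fun j => c * (RtoC (B * (A * g j)) * E))%C K.
Proof.
  induction K as [|K IH]; [now rewrite !sum_O|].
  rewrite !sum_Sn, <- IH. change (plus (sum_n g K) (g (S K))) with (sum_n g K + g (S K)).
  change plus with Cplus.
  rewrite !Rmult_plus_distr_l, RtoC_plus. eq_at C; ring.
Qed.

Lemma solid_R_legendre_sum n m p : (0 <= n)%Z -> (Z.abs m <= n)%Z -> sph_r p <> 0 ->
  solid_R n m p =
  sum_n (fun j =>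
    RtoC ((-1) ^ Z.to_nat n) * Ci ^ Z.to_nat (Z.abs m) / RtoC (INR (fact (Z.to_nat n + Z.to_nat (Z.abs m)))) *
    (RtoC (sph_r p ^ Z.to_nat n *
       ((-1) ^ Z.to_nat (Z.abs m) * (sqrt (vx p ^ 2 + vy p ^ 2) / sph_r p) ^ Z.to_nat (Z.abs m)
          / (2 ^ Z.to_nat n * INR (fact (Z.to_nat n))) *
        (legendre_coef (Z.to_nat n) (Z.to_nat (Z.abs m)) j * ((vz p / sph_r p) ^ 2 - 1) ^ j *
         rdivpow (Z.of_nat (Z.to_nat n) - Z.of_nat (Z.to_nat (Z.abs m)) - 2 * Z.of_nat j)
                 (vz p / sph_r p)))) *
     Cpowz (sph_eiphi p) m))%C (Z.to_nat n).
Proof.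
  intros Hn Hm Hr. unfold solid_R.
  destruct (Z.ltb_spec n 0), (Z.ltb_spec n (Z.abs m)); try lia. cbv zeta.
  set (r := sph_r p) in *. set (rho := sqrt (vx p ^ 2 + vy p ^ 2)).
  assert (Hr2 : r ^ 2 = vx p ^ 2 + vy p ^ 2 + vz p ^ 2) by (apply pow2_sqrt; nra).
  assert (Hcos : sph_cos_theta p = vz p / r).
  { unfold sph_cos_theta. fold r. destruct (Req_EM_T r 0); [contradiction|reflexivity]. }
  assert (Hsin : sqrt (1 - (vz p / r) ^ 2) = rho / r).
  { assert (0 <= r) by apply sqrt_pos. assert (0 <= rho) by apply sqrt_pos.
    assert (rho ^ 2 = vx p ^ 2 + vy p ^ 2) by (apply pow2_sqrt; nra).
    rewrite <- (sqrt_pow2 (rho / r)) by (apply Rdiv_le_0_compat; lra).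
    f_equal. field_simplify_eq; auto. nra. }
  rewrite Hcos. unfold assoc_legendre. rewrite Derive_n_legendre by lia.
  rewrite Hsin. unfold legendre_sum. apply sum_n_RtoC_scal.
Qed.

Lemma solid_R_harm_poly_nonneg_m n m p : (0 <= m)%Z -> (m <= n)%Z -> sph_r p <> 0 ->
  solid_R n m p = harm_poly n m p.
Proof.
  intros Hm Hmn Hr. rewrite solid_R_legendre_sum by (lia || exact Hr). unfold harm_poly.
  apply sum_n_ext. intros j.
  rewrite (Z.abs_eq m) by lia.
  unfold Cpowz. destruct (Z.leb_spec 0 m); [|lia].
  replace (Z.of_nat (Z.to_nat n) - Z.of_nat (Z.to_nat m) - 2 * Z.of_nat j)%Z
    with (n - 2 * Z.of_nat j - m)%Z by lia.
  destruct (Z_lt_le_dec (n - 2 * Z.of_nat j - m) 0) as [Hs|Hs].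
  - unfold harm_term. rewrite rdivpow_neg, harm_monomial_neg by lia. rewrite !Rmult_0_r. eq_at C; ring.
  - rewrite rdivpow_nonneg by lia.
    rewrite (legendre_term _ _ j (Z.to_nat (n - 2 * Z.of_nat j - m)) (xi p) (sph_eiphi p)
               (sqrt (vx p ^ 2 + vy p ^ 2))).
    + rewrite harm_term_xi_form by lia.
      rewrite pow2_sqrt by nra. reflexivity.
    + exact Hr.
    + apply sph_eiphi_xi.
    + unfold sph_r. rewrite !pow2_sqrt by nra. ring.
    + lia.
Qed.

Lemma solid_R_harm_poly_neg_m n m p : (m < 0)%Z -> (- m <= n)%Z -> sph_r p <> 0 ->
  solid_R n m p = harm_poly n m p.
Proof.
  intros Hm Hmn Hr. rewrite solid_R_legendre_sum by (lia || exact Hr).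
  rewrite (Z.abs_neq m) by lia.
  rewrite (harm_poly_sum n m p (Z.to_nat n + Z.to_nat (- m))) by lia.
  rewrite sum_n_vanishing_head.
  2: { intros q Hq. unfold harm_term. rewrite harm_monomial_neg by lia.
       change zero with (RtoC 0). eq_at C; ring. }
  apply sum_n_ext. intros j.
  unfold Cpowz. destruct (Z.leb_spec 0 m); [lia|].
  replace (Z.of_nat (Z.to_nat n) - Z.of_nat (Z.to_nat (- m)) - 2 * Z.of_nat j)%Z
    with (n - 2 * Z.of_nat j + m)%Z by lia.
  destruct (Z_lt_le_dec (n - 2 * Z.of_nat j + m) 0) as [Hs|Hs].
  - unfold harm_term. rewrite rdivpow_neg, harm_monomial_neg by lia. rewrite !Rmult_0_r.
    eq_at C; ring.
  - rewrite rdivpow_nonneg by lia.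
    rewrite (legendre_term _ _ j (Z.to_nat (n - 2 * Z.of_nat j + m)) (eta p) (Cinv (sph_eiphi p))
               (sqrt (vx p ^ 2 + vy p ^ 2))).
    + rewrite harm_term_eta_form by lia.
      rewrite pow2_sqrt by nra. reflexivity.
    + exact Hr.
    + apply sph_eiphi_inv_eta.
    + unfold sph_r. rewrite !pow2_sqrt by nra. ring.
    + lia.
Qed.

Lemma solid_R_harm_poly n m p : solid_R n m p = harm_poly n m p.
Proof.
  destruct (Z_lt_le_dec n 0) as [Hn|Hn]; [|destruct (Z_lt_le_dec n (Z.abs m)) as [Hm|Hm]].
  1, 2: rewrite harm_poly_out_of_range by lia; unfold solid_R;
        destruct (Z.ltb_spec n 0), (Z.ltb_spec n (Z.abs m)); try lia; reflexivity.
  destruct (Req_EM_T (sph_r p) 0) as [Hr|Hr].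
  - destruct (Z.eq_dec n 0) as [->|Hn0].
    + replace m with 0%Z by lia. unfold solid_R, harm_poly, harm_term, harm_coef, harm_monomial.
      cbn. unfold assoc_legendre, Cpowz, divpow. cbn.
      apply injective_projections; Csimpl; field.
    + rewrite harm_poly_at_origin by (lia || exact Hr). unfold solid_R.
      destruct (Z.ltb_spec n 0), (Z.ltb_spec n (Z.abs m)); try lia. cbn [orb].
      rewrite Hr, pow_i, Rmult_0_l by lia. unfold Cdiv. ring.
  - destruct (Z_lt_le_dec m 0).
    + apply solid_R_harm_poly_neg_m; lia || exact Hr.
    + apply solid_R_harm_poly_nonneg_m; lia || exact Hr.
Qed.

Lemma poly2_divpow f k : poly2 f -> poly2 (fun u v => divpow (f u v) k).
Proof.
  intros Pf. unfold divpow. destruct (k <? 0)%Z; [constructor|].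
  apply (poly2_ext (fun u v => RtoC (/ INR (fact (Z.to_nat k))) * f u v ^ Z.to_nat k)%C).
  - apply poly2_scal, poly2_pow, Pf.
  - intros; ring.
Qed.

Lemma pow_pred_mul (u : R) (b : nat) : u * (INR b * u ^ pred b) = INR b * u ^ b.
Proof. destruct b as [|b]; simpl; ring. Qed.

Section Recurrence.

Variables v1 ru rv : vec3.

Lemma poly2_harm_poly_r_q n m : poly2 (fun u v => harm_poly n m (r_q v1 ru rv u v)).
Proof.
  apply (poly2_sum (fun q u v => harm_term n m q (r_q v1 ru rv u v))). intros q.
  apply poly2_scal. unfold harm_monomial, r_q.
  repeat apply poly2_mult.
  - apply (poly2_ext (fun u v => divpow (RtoC u * xi ru + RtoC v * xi rv + xi v1)%C (Z.of_nat q + m))).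
    + apply poly2_divpow, poly2_affine.
    + intros; now rewrite !xi_vadd, !xi_vscal.
  - apply (poly2_ext (fun u v => divpow (RtoC u * eta ru + RtoC v * eta rv + eta v1)%C (Z.of_nat q))).
    + apply poly2_divpow, poly2_affine.
    + intros; now rewrite !eta_vadd, !eta_vscal.
  - apply (poly2_ext (fun u v => divpow (RtoC u * zc ru + RtoC v * zc rv + zc v1)%C
                                        (n - 2 * Z.of_nat q - m))).
    + apply poly2_divpow, poly2_affine.
    + intros; now rewrite !zc_vadd, !zc_vscal.
Qed.

Lemma poly2_Q_fun n m b c : poly2 (Q_fun v1 ru rv n m b c).
Proof.
  apply (poly2_ext (fun u v => harm_poly n m (r_q v1 ru rv u v) * (RtoC u ^ b * RtoC v ^ c))%C).
  - apply poly2_mult; [apply poly2_harm_poly_r_q|].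
    apply poly2_mult; apply poly2_pow; constructor.
  - intros. unfold Q_fun. now rewrite solid_R_harm_poly, RtoC_mult, !RtoC_pow.
Qed.

Lemma r_q_shift_u t y : r_q v1 ru rv t y = vadd (r_q v1 ru rv 0 y) (vscal t ru).
Proof.
  destruct v1 as [[a1 a2] a3], ru as [[b1 b2] b3], rv as [[c1 c2] c3].
  unfold r_q, vadd, vscal, vx, vy, vz; simpl. f_equal; [f_equal|]; ring.
Qed.

Lemma r_q_shift_v x t : r_q v1 ru rv x t = vadd (r_q v1 ru rv x 0) (vscal t rv).
Proof.
  destruct v1 as [[a1 a2] a3], ru as [[b1 b2] b3], rv as [[c1 c2] c3].
  unfold r_q, vadd, vscal, vx, vy, vz; simpl. f_equal; [f_equal|]; ring.
Qed.

Lemma is_derive_Q_fun_u n m b c x y : (0 <= n)%Z ->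
  is_derive_C (fun t => Q_fun v1 ru rv n m b c t y) x
    (ladder n m ru (r_q v1 ru rv x y) * RtoC (x ^ b * y ^ c) +
     harm_poly n m (r_q v1 ru rv x y) * RtoC (INR b * x ^ pred b * y ^ c))%C.
Proof.
  intros Hn. unfold Q_fun.
  apply (is_derive_C_ext (fun t => harm_poly n m (r_q v1 ru rv t y) * RtoC (t ^ b * y ^ c))%C).
  { intros; now rewrite solid_R_harm_poly. }
  apply (is_derive_C_mult (fun t => harm_poly n m (r_q v1 ru rv t y))
                          (fun t => RtoC (t ^ b * y ^ c))).
  - apply (is_derive_C_ext (fun t => harm_poly n m (vadd (r_q v1 ru rv 0 y) (vscal t ru)))).
    { intros t. now rewrite (r_q_shift_u t y). }
    rewrite (r_q_shift_u x y). apply is_derive_harm_poly, Hn.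
  - apply is_derive_RtoC.
    replace (INR b * x ^ pred b * y ^ c) with (INR b * 1 * x ^ pred b * y ^ c + x ^ b * 0) by ring.
    apply (Derive.is_derive_mult (fun t => t ^ b) (fun _ => y ^ c)).
    + apply is_derive_pow, (is_derive_id (K := R_AbsRing)).
    + apply (is_derive_const (K := R_AbsRing) (V := R_NormedModule)).
Qed.

Lemma is_derive_Q_fun_v n m b c x y : (0 <= n)%Z ->
  is_derive_C (fun t => Q_fun v1 ru rv n m b c x t) y
    (ladder n m rv (r_q v1 ru rv x y) * RtoC (x ^ b * y ^ c) +
     harm_poly n m (r_q v1 ru rv x y) * RtoC (x ^ b * (INR c * y ^ pred c)))%C.
Proof.
  intros Hn. unfold Q_fun.
  apply (is_derive_C_ext (fun t => harm_poly n m (r_q v1 ru rv x t) * RtoC (x ^ b * t ^ c))%C).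
  { intros; now rewrite solid_R_harm_poly. }
  apply (is_derive_C_mult (fun t => harm_poly n m (r_q v1 ru rv x t))
                          (fun t => RtoC (x ^ b * t ^ c))).
  - apply (is_derive_C_ext (fun t => harm_poly n m (vadd (r_q v1 ru rv x 0) (vscal t rv)))).
    { intros t. now rewrite (r_q_shift_v x t). }
    rewrite (r_q_shift_v x y). apply is_derive_harm_poly, Hn.
  - apply is_derive_RtoC.
    replace (x ^ b * (INR c * y ^ pred c)) with (0 * y ^ c + x ^ b * (INR c * 1 * y ^ pred c)) by ring.
    apply (Derive.is_derive_mult (fun _ => x ^ b) (fun t => t ^ c)).
    + apply (is_derive_const (K := R_AbsRing) (V := R_NormedModule)).
    + apply is_derive_pow, (is_derive_id (K := R_AbsRing)).
Qed.

Lemma ladder_r_q n m u v P :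
  ladder n m (r_q v1 ru rv u v) P =
  (RtoC u * ladder n m ru P + RtoC v * ladder n m rv P + ladder n m v1 P)%C.
Proof.
  unfold ladder, r_q.
  rewrite !xi_vadd, !eta_vadd, !zc_vadd, !xi_vscal, !eta_vscal, !zc_vscal. ring.
Qed.

Lemma euler_Q_fun n m b c u v : (0 <= n)%Z ->
  (RtoC u * (ladder n m ru (r_q v1 ru rv u v) * RtoC (u ^ b * v ^ c) +
             harm_poly n m (r_q v1 ru rv u v) * RtoC (INR b * u ^ pred b * v ^ c)) +
   RtoC v * (ladder n m rv (r_q v1 ru rv u v) * RtoC (u ^ b * v ^ c) +
             harm_poly n m (r_q v1 ru rv u v) * RtoC (u ^ b * (INR c * v ^ pred c))) +
   RtoC 2 * Q_fun v1 ru rv n m b c u v)%C =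
  (RtoC (IZR n + INR b + INR c + 2) * Q_fun v1 ru rv n m b c u v
   + - (Ci * xi v1) * Q_fun v1 ru rv (n - 1) (m - 1) b c u v
   + - (Ci * eta v1) * Q_fun v1 ru rv (n - 1) (m + 1) b c u v
   + zc v1 * Q_fun v1 ru rv (n - 1) m b c u v)%C.
Proof.
  intros Hn. set (P := r_q v1 ru rv u v).
  assert (Eu : (RtoC u * RtoC (INR b * u ^ pred b * v ^ c))%C = (RtoC (INR b) * RtoC (u ^ b * v ^ c))%C).
  { rewrite <- !RtoC_mult. f_equal.
    transitivity (u * (INR b * u ^ pred b) * v ^ c); [ring|rewrite pow_pred_mul; ring]. }
  assert (Ev : (RtoC v * RtoC (u ^ b * (INR c * v ^ pred c)))%C = (RtoC (INR c) * RtoC (u ^ b * v ^ c))%C).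
  { rewrite <- !RtoC_mult. f_equal.
    transitivity (u ^ b * (v * (INR c * v ^ pred c))); [ring|rewrite pow_pred_mul; ring]. }
  assert (Elad : (RtoC u * ladder n m ru P + RtoC v * ladder n m rv P)%C =
                 (RtoC (IZR n) * harm_poly n m P - ladder n m v1 P)%C).
  { rewrite <- harm_poly_euler by exact Hn. unfold P. rewrite (ladder_r_q n m u v). ring. }
  transitivity ((RtoC u * ladder n m ru P + RtoC v * ladder n m rv P) * RtoC (u ^ b * v ^ c) +
     harm_poly n m P * (RtoC u * RtoC (INR b * u ^ pred b * v ^ c)) +
     harm_poly n m P * (RtoC v * RtoC (u ^ b * (INR c * v ^ pred c))) +
     RtoC 2 * Q_fun v1 ru rv n m b c u v)%C.
  { ring. }
  rewrite Eu, Ev, Elad. unfold Q_fun, ladder. rewrite !solid_R_harm_poly. fold P.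
  rewrite !RtoC_plus. ring.
Qed.

End Recurrence.

Theorem lemma1 (v1 ru rv : vec3) (hind : lin_indep2 ru rv)
  (n m : Z) (b c : nat) (hn : (0 <= n)%Z) (hm : (Z.abs m <= n)%Z) :
  let xi0 := Cdiv (vx v1, vy v1) (RtoC 2) in
  let eta0 := Cdiv (vx v1, Ropp (vy v1)) (RtoC 2) in
  let z0 := RtoC (vz v1) in
  psi v1 ru rv n m b c =
  Cdiv
    (Cplus (Cplus (Cplus
       (Cmult Ci (Cmult xi0 (psi v1 ru rv (n - 1) (m - 1) b c)))
       (Cmult Ci (Cmult eta0 (psi v1 ru rv (n - 1) (m + 1) b c))))
       (Copp (Cmult z0 (psi v1 ru rv (n - 1) m b c))))
       (jfun v1 ru rv n m b c))
    (RtoC (IZR n + INR b + INR c + 2)).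
Proof.
  intros xi0 eta0 z0.
  assert (Hxi : xi0 = xi v1) by (apply injective_projections; simpl; field).
  assert (Heta : eta0 = eta v1) by (apply injective_projections; simpl; field).
  assert (HN : 0 < IZR n + INR b + INR c + 2).
  { pose proof (IZR_le 0 n hn). pose proof (pos_INR b). pose proof (pos_INR c). lra. }
  pose proof (triangle_divergence _ _ _ (poly2_Q_fun v1 ru rv n m b c)
    (fun x y => is_derive_Q_fun_u v1 ru rv n m b c x y hn)
    (fun x y => is_derive_Q_fun_v v1 ru rv n m b c x y hn)) as Hdiv.
  cbv beta in Hdiv.
  rewrite (tri_int_ext _ _ (fun u v => euler_Q_fun v1 ru rv n m b c u v hn)) in Hdiv.
  rewrite !tri_int_plus, !tri_int_scal in Hdiv
    by repeat first [apply poly2_plus | apply poly2_scal | apply poly2_Q_fun].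
  change (tri_int (Q_fun v1 ru rv ?k ?l b c)) with (psi v1 ru rv k l b c) in Hdiv.
  change (hyp_int (Q_fun v1 ru rv n m b c)) with (jfun v1 ru rv n m b c) in Hdiv.
  rewrite <- Hdiv, Hxi, Heta. unfold z0, zc.
  field. intros H. apply (f_equal fst) in H. simpl in H. lra.
Qed.
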